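(* Let $\mathbb{X}$ be a real reflexive Banach space, $\mathbb{Y}$ a real normed linear space, and $0\neq T\in\mathbb{K}(\mathbb{X},\mathbb{Y})$. Then the following are equivalent: (i) $T$ is a smooth point of $\mathbb{K}(\mathbb{X},\mathbb{Y})$. (ii) $M_T=\{\pm x_0\}$ for some $x_0\in S_{\mathbb{X}}$ and $Tx_0$ is a smooth point of $\mathbb{Y}$. (iii) For every $A\in\mathbb{K}(\mathbb{X},\mathbb{Y})$: $T\perp_B A$ if and only if for every semi-inner-product $[\cdot,\cdot]$ on $\mathbb{Y}$ compatible with the norm and every norming sequence $\{x_n\}$ for $T$, every subsequential limit of $\{[Ax_n,Tx_n]\}$ equals $0$.
   Context: All spaces are real. $\mathbb{K}(\mathbb{X},\mathbb{Y})$ is the space of compact linear operators with the operator norm; $S_{\mathbb{X}}$ is the unit sphere; $M_T=\{x\in S_{\mathbb{X}}:\|Tx\|=\|T\|\}$. A nonzero element $x$ of a normed space $\mathbb{Z}$ is smooth if there is a unique $f\in\mathbb{Z}^*$ with $\|f\|=1$ and $f(x)=\|x\|$. $x\perp_B y$ means $\|x+\lambda y\|\ge\|x\|$ for all $\lambda\in\mathbb{R}$. A norming sequence for $T$ is $\{x_n\}\subseteq S_{\mathbb{X}}$ with $\|Tx_n\|\to\|T\|$. A semi-inner-product on $\mathbb{Y}$ is a map $[\cdot,\cdot]:\mathbb{Y}\times\mathbb{Y}\to\mathbb{R}$, linear in the first variable, with $[x,x]>0$ for $x\ne0$, $|[x,y]|^2\le[x,x][y,y]$, $[x,\alpha y]=\alpha[x,y]$;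 compatible with the norm means $[x,x]=\|x\|^2$. *)

From Stdlib Require Import Reals ClassicalEpsilon.
Open Scope R_scope.

Record NormedSpace : Type := mkNormedSpace {
  car :> Type;
  zero : car;
  add : car -> car -> car;
  opp : car -> car;
  scal : R -> car -> car;
  norm : car -> R;
  add_assoc : forall x y z, add x (add y z) = add (add x y) z;
  add_comm : forall x y, add x y = add y x;
  add_zero : forall x, add x zero = x;
  add_opp : forall x, add x (opp x) = zero;
  scal_assoc : forall a b x, scal a (scal b x) = scal (a * b) x;
  scal_one : forall x, scal 1 x = x;
  scal_add_r : forall a x y, scal a (add x y) = add (scal a x) (scal a y);
  scal_add_l : forall a b x, scal (a + b) x = add (scal a x) (scal b x);
  norm_eq_zero : forall x, norm x = 0 -> x = zero;
  norm_triangle : forall x y, norm (add x y) <= norm x + norm y;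
  norm_scal : forall a x, norm (scal a x) = Rabs a * norm x
}.

Arguments zero {_}.
Arguments add {_} _ _.
Arguments opp {_} _.
Arguments scal {_} _ _.
Arguments norm {_} _.

Definition sub {N : NormedSpace} (x y : N) : N := add x (opp y).

Definition seq_converges {N : NormedSpace} (u : nat -> N) (l : N) : Prop :=
  forall eps, eps > 0 -> exists K, forall n, (n >= K)%nat -> norm (sub (u n) l) < eps.

Definition cauchy_seq {N : NormedSpace} (u : nat -> N) : Prop :=
  forall eps, eps > 0 -> exists K, forall m n, (m >= K)%nat -> (n >= K)%nat ->
    norm (sub (u m) (u n)) < eps.

Definition Banach (N : NormedSpace) : Prop :=
  forall u : nat -> N, cauchy_seq u -> exists l, seq_converges u l.

Definition strictly_increasing (phi : nat -> nat) : Prop :=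
  forall n, (phi n < phi (S n))%nat.

(* sup { h x : ||x|| <= 1 }  (meaningful when this sup exists) *)
Definition sup_on_ball {X : NormedSpace} (h : X -> R) : R :=
  epsilon (inhabits 0) (fun r => is_lub (fun s => exists x : X, norm x <= 1 /\ s = h x) r).

Definition linear_map {X Y : NormedSpace} (T : X -> Y) : Prop :=
  (forall x y, T (add x y) = add (T x) (T y)) /\
  (forall a x, T (scal a x) = scal a (T x)).

Definition linear_functional {X : NormedSpace} (f : X -> R) : Prop :=
  (forall x y, f (add x y) = f x + f y) /\ (forall a x, f (scal a x) = a * f x).

Definition in_dual {X : NormedSpace} (f : X -> R) : Prop :=
  linear_functional f /\ exists C, forall x, Rabs (f x) <= C * norm x.

Definition dual_norm {X : NormedSpace} (f : X -> R) : R :=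
  sup_on_ball (fun x => Rabs (f x)).

(* reflexive: the canonical embedding X -> X^** is onto *)
Definition reflexive (X : NormedSpace) : Prop :=
  forall Phi : (X -> R) -> R,
    (forall f g, in_dual f -> in_dual g -> Phi (fun x => f x + g x) = Phi f + Phi g) ->
    (forall a f, in_dual f -> Phi (fun x => a * f x) = a * Phi f) ->
    (exists C, forall f, in_dual f -> Rabs (Phi f) <= C * dual_norm f) ->
    exists x : X, forall f, in_dual f -> Phi f = f x.

(* compact linear operators: image of the unit ball is relatively compact
   (sequentially: every bounded sequence has an image with a convergent
   subsequence in Y) *)
Definition compact_op {X Y : NormedSpace} (T : X -> Y) : Prop :=
  linear_map T /\
  forall u : nat -> X, (forall n, norm (u n) <= 1) ->
    exists (phi : nat -> nat) (l : Y), strictly_increasing phi /\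
      seq_converges (fun n => T (u (phi n))) l.

Definition op_norm {X Y : NormedSpace} (T : X -> Y) : R :=
  sup_on_ball (fun x => norm (T x)).

Definition op_add {X Y : NormedSpace} (A B : X -> Y) : X -> Y := fun x => add (A x) (B x).
Definition op_scal {X Y : NormedSpace} (a : R) (A : X -> Y) : X -> Y := fun x => scal a (A x).
Definition op_zero {X Y : NormedSpace} : X -> Y := fun _ => zero.

(* Generic smoothness in a (sub)space P of a real vector space V with norm nrm:
   f is an element of the dual of P with norm 1. *)
Definition norm_one_functional {V : Type} (P : V -> Prop) (addV : V -> V -> V)
  (scalV : R -> V -> V) (nrm : V -> R) (f : V -> R) : Prop :=
  (forall u v, P u -> P v -> f (addV u v) = f u + f v) /\
  (forall a u, P u -> f (scalV a u) = a * f u) /\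
  is_lub (fun r => exists u, P u /\ nrm u <= 1 /\ r = Rabs (f u)) 1.

Definition smooth_in {V : Type} (P : V -> Prop) (addV : V -> V -> V)
  (scalV : R -> V -> V) (zeroV : V) (nrm : V -> R) (v : V) : Prop :=
  P v /\ v <> zeroV /\
  exists f, norm_one_functional P addV scalV nrm f /\ f v = nrm v /\
    forall g, norm_one_functional P addV scalV nrm g -> g v = nrm v ->
      forall u, P u -> g u = f u.

Definition smooth_point {Y : NormedSpace} (y : Y) : Prop :=
  smooth_in (fun _ => True) (@add Y) (@scal Y) zero (@norm Y) y.

Definition smooth_point_K {X Y : NormedSpace} (T : X -> Y) : Prop :=
  smooth_in (@compact_op X Y) op_add op_scal op_zero op_norm T.

Definition norm_attainment_set {X Y : NormedSpace} (T : X -> Y) (x : X) : Prop :=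
  norm x = 1 /\ norm (T x) = op_norm T.

Definition BJ_orth_K {X Y : NormedSpace} (T A : X -> Y) : Prop :=
  forall lam : R, op_norm (op_add T (op_scal lam A)) >= op_norm T.

Definition compatible_sip {Y : NormedSpace} (s : Y -> Y -> R) : Prop :=
  (forall x y z, s (add x y) z = s x z + s y z) /\
  (forall a x y, s (scal a x) y = a * s x y) /\
  (forall x, x <> zero -> s x x > 0) /\
  (forall x y, (s x y) ^ 2 <= s x x * s y y) /\
  (forall a x y, s x (scal a y) = a * s x y) /\
  (forall x, s x x = (norm x) ^ 2).

Definition norming_sequence {X Y : NormedSpace} (T : X -> Y) (u : nat -> X) : Prop :=
  (forall n, norm (u n) = 1) /\ Un_cv (fun n => norm (T (u n))) (op_norm T).

Definition subsequential_limit (s : nat -> R) (l : R) : Prop :=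
  exists phi, strictly_increasing phi /\ Un_cv (fun n => s (phi n)) l.

(* A unit vector [x0] at which the compact operator [T] attains its norm exists by reflexivity and
   compactness, and for [x] in [M_T] and [g] supporting [T x], [A |-> g (A x)] is a norm-one
   functional on [K(X,Y)] supporting [T].  If [T] is smooth these functionals all coincide; testing
   them on rank-one operators forces [M_T = {x0, -x0}] and [T x0] smooth.  Conversely, under (ii)
   every norming sequence has a subsequence converging to [x0] or [-x0], so Smulian's lemma at the
   smooth point [T x0] shows that the one-sided derivative of the operator norm at [T] in a direction
   [B] is [f (B x0)], where [f] supports [T x0]; hence [A |-> f (A x0)] is the only functional
   supporting [T].  Both sides of (iii) then reduce to [f (A x0) = 0]: Birkhoff-James orthogonality
   through the derivative, and the semi-inner-product limits through Smulian's lemma applied to the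
   functionals [v |-> [v, T u_n] / |T u_n|].  Finally (iii) gives (ii): rank-one operators [A] with
   [f (A x0) = 0] are orthogonal to [T], so (iii) forces [[A x, T x] = 0] for [x] in [M_T], which
   excludes a second pair of norm-attaining points and a second supporting functional at [T x0]. *)

From Stdlib Require Import Reals ClassicalEpsilon Lra Lia Classical FunctionalExtensionality.
From mathcomp Require boolp classical_sets.
Open Scope R_scope.

(** * Hahn-Banach *)

Lemma zorn_premaximal (T : Type) (t0 : T) (le : T -> T -> Prop) :
  (forall t, le t t) -> (forall r s t, le r s -> le s t -> le r t) ->
  (forall A : T -> Prop, (forall s t, A s -> A t -> le s t \/ le t s) ->
     exists t, forall s, A s -> le s t) ->
  exists t, forall s, le t s -> le s t.
Proof.
  intros le_refl le_trans chain_ub.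
  set (leb := fun s t => boolp.asbool (le s t)).
  assert (leb_le : forall s t, leb s t = true <-> le s t).
  { intros s t. unfold leb. destruct (boolp.asboolP (le s t)); split; easy. }
  destruct (@classical_sets.ZL_preorder T t0 leb) as [t Ht].
  - intro t. apply leb_le, le_refl.
  - intros r s t Hrs Hst. apply leb_le. apply le_trans with s; apply leb_le; assumption.
  - intros A HA. destruct (chain_ub A) as [t Ht].
    + intros s u As Au. destruct (HA s u As Au) as [H|H]; [left|right]; apply leb_le, H.
    + exists t. intros s As. apply leb_le, Ht, As.
  - exists t. intros s Hts. apply leb_le, Ht, leb_le, Hts.
Qed.

Record VectorSpace : Type := {
  vcar :> Type;
  vzero : vcar;
  vadd : vcar -> vcar -> vcar;
  vscal : R -> vcar -> vcar;
  vadd_assoc : forall x y z, vadd x (vadd y z) = vadd (vadd x y) z;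
  vadd_comm : forall x y, vadd x y = vadd y x;
  vadd_zero : forall x, vadd x vzero = x;
  vadd_opp : forall x, vadd x (vscal (-1) x) = vzero;
  vscal_assoc : forall a b x, vscal a (vscal b x) = vscal (a * b) x;
  vscal_one : forall x, vscal 1 x = x;
  vscal_add_r : forall a x y, vscal a (vadd x y) = vadd (vscal a x) (vscal a y);
  vscal_add_l : forall a b x, vscal (a + b) x = vadd (vscal a x) (vscal b x)
}.
Arguments vzero {_}.
Arguments vadd {_} _ _.
Arguments vscal {_} _ _.

Section VectorSpaceTheory.
Variable V : VectorSpace.
Implicit Types x y z : V.

Lemma vadd_zero_l x : vadd vzero x = x.
Proof. rewrite vadd_comm; apply vadd_zero. Qed.

Lemma vadd_cancel_r x y z : vadd x z = vadd y z -> x = y.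
Proof.
  intro H. rewrite <- (vadd_zero _ x), <- (vadd_zero _ y), <- (vadd_opp _ z), !vadd_assoc, H.
  reflexivity.
Qed.

Lemma vscal_zero_l x : vscal 0 x = vzero.
Proof.
  apply (vadd_cancel_r _ _ (vscal 0 x)). rewrite vadd_zero_l, <- vscal_add_l, Rplus_0_l.
  reflexivity.
Qed.

Lemma vadd_swap x y z w : vadd (vadd x y) (vadd z w) = vadd (vadd x z) (vadd y w).
Proof. rewrite <- !vadd_assoc, (vadd_assoc _ y z w), (vadd_comm _ y z), <- vadd_assoc. reflexivity. Qed.

Lemma vadd_lin w1 t1 w2 t2 (v : V) :
  vadd (vadd w1 (vscal t1 v)) (vadd w2 (vscal t2 v)) = vadd (vadd w1 w2) (vscal (t1 + t2) v).
Proof. rewrite vadd_swap, vscal_add_l. reflexivity. Qed.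

Lemma vscal_lin a w t (v : V) :
  vscal a (vadd w (vscal t v)) = vadd (vscal a w) (vscal (a * t) v).
Proof. rewrite vscal_add_r, vscal_assoc. reflexivity. Qed.

Lemma vdiff_lin w1 t1 w2 t2 (v : V) :
  vadd (vadd w1 (vscal t1 v)) (vscal (-1) (vadd w2 (vscal t2 v))) =
  vadd (vadd w1 (vscal (-1) w2)) (vscal (t1 - t2) v).
Proof.
  rewrite vscal_lin, vadd_lin. replace (t1 - t2) with (t1 + -1 * t2) by ring. reflexivity.
Qed.

Lemma vadd_eq_zero x y : vadd x y = vzero -> y = vscal (-1) x.
Proof.
  intro H. rewrite <- (vadd_zero_l y), <- (vadd_opp _ x), (vadd_comm _ x), <- vadd_assoc, H, vadd_zero.
  reflexivity.
Qed.

Lemma vdiff_zero x y : vadd x (vscal (-1) y) = vzero -> x = y.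
Proof.
  intro H. apply (vadd_cancel_r _ _ (vscal (-1) y)). rewrite H, vadd_opp. reflexivity.
Qed.

End VectorSpaceTheory.

Definition subspace {V : VectorSpace} (E : V -> Prop) :=
  E vzero /\ (forall x y, E x -> E y -> E (vadd x y)) /\ (forall a x, E x -> E (vscal a x)).

Definition linear_on {V : VectorSpace} (E : V -> Prop) (F : V -> R) :=
  (forall x y, E x -> E y -> F (vadd x y) = F x + F y) /\
  (forall a x, E x -> F (vscal a x) = a * F x).

Section HahnBanach.
Variables (V : VectorSpace) (E : V -> Prop) (p : V -> R).
Hypothesis E_subspace : subspace E.
Hypothesis p_subadditive : forall x y, E x -> E y -> p (vadd x y) <= p x + p y.
Hypothesis p_homogeneous : forall a x, 0 <= a -> E x -> p (vscal a x) = a * p x.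

(* A partial linear functional on [E] dominated by [p], given by its graph. *)
Record dominated_graph (G : V -> R -> Prop) : Prop := {
  graph_zero : G vzero 0;
  graph_add : forall x r y s, G x r -> G y s -> G (vadd x y) (r + s);
  graph_scal : forall a x r, G x r -> G (vscal a x) (a * r);
  graph_functional : forall x r s, G x r -> G x s -> r = s;
  graph_in : forall x r, G x r -> E x;
  graph_le : forall x r, G x r -> r <= p x
}.

Definition graph_extend (G : V -> R -> Prop) (v : V) (c : R) : V -> R -> Prop :=
  fun x r => exists w s t, G w s /\ x = vadd w (vscal t v) /\ r = s + t * c.

(* The constant [c] assigned to the new direction [v] must satisfy these inequalities for the
   extension to stay below [p]. *)
Definition admissible_slope (G : V -> R -> Prop) (v : V) (c : R) :=
  forall w s, G w s -> s - p (vadd w (vscal (-1) v)) <= c /\ c <= p (vadd w v) - s.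

Lemma admissible_slope_exists G v : dominated_graph G -> E v -> exists c, admissible_slope G v c.
Proof.
  intros HG Ev. destruct E_subspace as [_ [Eadd Escal]].
  assert (sep : forall w s w' s', G w s -> G w' s' -> s - p (vadd w (vscal (-1) v)) <= p (vadd w' v) - s').
  { intros w s w' s' Gw Gw'.
    assert (Hsum : vadd w w' = vadd (vadd w (vscal (-1) v)) (vadd w' v)).
    { rewrite vadd_swap, (vadd_comm _ (vscal (-1) v)), vadd_opp, vadd_zero. reflexivity. }
    pose proof (graph_le _ HG _ _ (graph_add _ HG _ _ _ _ Gw Gw')).
    pose proof (p_subadditive (vadd w (vscal (-1) v)) (vadd w' v)
                  (Eadd _ _ (graph_in _ HG _ _ Gw) (Escal _ _ Ev)) (Eadd _ _ (graph_in _ HG _ _ Gw') Ev)).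
    rewrite <- Hsum in H0. lra. }
  set (S := fun r => exists w s, G w s /\ r = s - p (vadd w (vscal (-1) v))).
  destruct (completeness S) as [c [c_ub c_lub]].
  - exists (p (vadd vzero v) - 0). intros r [w [s [Gw ->]]]. apply sep; auto. apply (graph_zero _ HG).
  - exists (0 - p (vadd vzero (vscal (-1) v))), vzero, 0. split; auto. apply (graph_zero _ HG).
  - exists c. intros w s Gw. split.
    + apply c_ub. exists w, s. auto.
    + apply c_lub. intros r [w' [s' [Gw' ->]]]. apply sep; auto.
Qed.

Lemma graph_extend_decomposition_unique G v w1 s1 t1 w2 s2 t2 : dominated_graph G ->
  (forall s, ~ G v s) -> G w1 s1 -> G w2 s2 -> vadd w1 (vscal t1 v) = vadd w2 (vscal t2 v) ->
  t1 = t2 /\ s1 = s2.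
Proof.
  intros HG Gv G1 G2 Heq.
  assert (H0 : vadd (vadd w1 (vscal (-1) w2)) (vscal (t1 - t2) v) = vzero).
  { rewrite <- vdiff_lin, Heq, vadd_opp. reflexivity. }
  destruct (Req_dec t1 t2) as [<-|Nt].
  - rewrite Rminus_diag, vscal_zero_l, vadd_zero in H0.
    apply vdiff_zero in H0. subst w2. split; auto. apply (graph_functional _ HG w1); auto.
  - exfalso. apply vadd_eq_zero in H0.
    apply (Gv (/ (t1 - t2) * (-1 * (s1 + -1 * s2)))).
    replace v with (vscal (/ (t1 - t2)) (vscal (-1) (vadd w1 (vscal (-1) w2)))).
    + apply (graph_scal _ HG), (graph_scal _ HG), (graph_add _ HG); auto.
      apply (graph_scal _ HG); auto.
    + rewrite <- H0, vscal_assoc, Rinv_l, vscal_one by lra. reflexivity.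
Qed.

Lemma graph_extend_le G v c w s t : dominated_graph G -> E v -> admissible_slope G v c -> G w s ->
  s + t * c <= p (vadd w (vscal t v)).
Proof.
  intros HG Ev Hc Gw. destruct E_subspace as [_ [Eadd Escal]]. pose proof (graph_in _ HG _ _ Gw) as Ew.
  destruct (Rtotal_order t 0) as [Hneg|[->|Hpos]].
  - set (u := - t). assert (Hu : 0 < u) by (unfold u; lra).
    assert (Hw : vadd w (vscal t v) = vscal u (vadd (vscal (/ u) w) (vscal (-1) v))).
    { rewrite vscal_lin, vscal_assoc, Rinv_r, vscal_one by lra. unfold u. f_equal. f_equal. ring. }
    rewrite Hw, p_homogeneous by (first [lra | apply Eadd; apply Escal; auto]).
    pose proof (proj1 (Hc _ _ (graph_scal _ HG (/ u) _ _ Gw))) as Hcu.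
    apply Rmult_le_compat_l with (r := u) in Hcu; [|lra].
    rewrite Rmult_minus_distr_l, <- Rmult_assoc, Rinv_r, Rmult_1_l in Hcu by lra.
    unfold u in *. lra.
  - rewrite vscal_zero_l, vadd_zero, Rmult_0_l, Rplus_0_r. apply (graph_le _ HG _ _ Gw).
  - assert (Hw : vadd w (vscal t v) = vscal t (vadd (vscal (/ t) w) v)).
    { rewrite vscal_add_r, vscal_assoc, Rinv_r, vscal_one by lra. reflexivity. }
    rewrite Hw, p_homogeneous by (first [lra | apply Eadd; [apply Escal|]; auto]).
    pose proof (proj2 (Hc _ _ (graph_scal _ HG (/ t) _ _ Gw))) as Hct.
    apply Rmult_le_compat_l with (r := t) in Hct; [|lra].
    rewrite Rmult_minus_distr_l, <- Rmult_assoc, Rinv_r, Rmult_1_l in Hct by lra. lra.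
Qed.

Lemma graph_extend_dominated G v c : dominated_graph G -> E v -> (forall s, ~ G v s) ->
  admissible_slope G v c -> dominated_graph (graph_extend G v c).
Proof.
  intros HG Ev Gv Hc. destruct E_subspace as [_ [Eadd Escal]].
  split.
  - exists vzero, 0, 0. rewrite vscal_zero_l, vadd_zero. split; [apply (graph_zero _ HG)|split; auto; ring].
  - intros x r y s [w1 [s1 [t1 [G1 [-> ->]]]]] [w2 [s2 [t2 [G2 [-> ->]]]]].
    exists (vadd w1 w2), (s1 + s2), (t1 + t2).
    split; [apply (graph_add _ HG); auto|split; [apply vadd_lin|ring]].
  - intros a x r [w [s [t [Gw [-> ->]]]]]. exists (vscal a w), (a * s), (a * t).
    split; [apply (graph_scal _ HG); auto|split; [apply vscal_lin|ring]].
  - intros x r r' [w1 [s1 [t1 [G1 [-> ->]]]]] [w2 [s2 [t2 [G2 [Heq ->]]]]].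
    destruct (graph_extend_decomposition_unique G v w1 s1 t1 w2 s2 t2 HG Gv G1 G2 Heq) as [-> ->].
    reflexivity.
  - intros x r [w [s [t [Gw [-> ->]]]]]. apply Eadd; [apply (graph_in _ HG _ _ Gw)|apply Escal, Ev].
  - intros x r [w [s [t [Gw [-> ->]]]]]. apply (graph_extend_le G); auto.
Qed.

Definition subgraph (G H : V -> R -> Prop) := forall x r, G x r -> H x r.

Lemma dominated_graph_chain_union (A : (V -> R -> Prop) -> Prop) :
  (forall G, A G -> dominated_graph G) ->
  (forall G H, A G -> A H -> subgraph G H \/ subgraph H G) -> (exists G, A G) ->
  dominated_graph (fun x r => exists G, A G /\ G x r).
Proof.
  intros Adom Achain [G0 AG0].
  assert (common : forall x r y s, (exists G, A G /\ G x r) -> (exists G, A G /\ G y s) ->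
            exists G, A G /\ G x r /\ G y s).
  { intros x r y s [G1 [A1 H1]] [G2 [A2 H2]].
    destruct (Achain G1 G2 A1 A2) as [S|S]; [exists G2|exists G1]; auto. }
  split.
  - exists G0. split; auto. apply (graph_zero _ (Adom _ AG0)).
  - intros x r y s Hx Hy. destruct (common _ _ _ _ Hx Hy) as [G [AG [Gx Gy]]].
    exists G. split; auto. apply (graph_add _ (Adom _ AG)); auto.
  - intros a x r [G [AG Gx]]. exists G. split; auto. apply (graph_scal _ (Adom _ AG)); auto.
  - intros x r s Hr Hs. destruct (common _ _ _ _ Hr Hs) as [G [AG [Gr Gs]]].
    apply (graph_functional _ (Adom _ AG) x); auto.
  - intros x r [G [AG Gx]]. apply (graph_in _ (Adom _ AG) _ _ Gx).
  - intros x r [G [AG Gx]]. apply (graph_le _ (Adom _ AG) _ _ Gx).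
Qed.

Lemma maximal_dominated_graph G0 : dominated_graph G0 ->
  exists G, dominated_graph G /\ subgraph G0 G /\ forall v, E v -> exists r, G v r.
Proof.
  intros HG0.
  set (T := {G : V -> R -> Prop | dominated_graph G /\ subgraph G0 G}).
  set (t0 := exist _ G0 (conj HG0 (fun x r H => H)) : T).
  destruct (zorn_premaximal T t0 (fun e e' => subgraph (proj1_sig e) (proj1_sig e')))
    as [[G [HG G0G]] Gmax].
  - intros e x r H. exact H.
  - intros e1 e2 e3 H12 H23 x r H. apply H23, H12, H.
  - intros A Achain. destruct (classic (exists e, A e)) as [[e Ae]|Aempty].
    2: { exists t0. intros e Ae. exfalso. apply Aempty. exists e; exact Ae. }
    set (U := fun x r => exists G, (exists e, A e /\ G = proj1_sig e) /\ G x r).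
    assert (HU : dominated_graph U).
    { apply dominated_graph_chain_union.
      - intros G [e' [_ ->]]. apply (proj2_sig e').
      - intros G H [e1 [A1 ->]] [e2 [A2 ->]]. apply Achain; auto.
      - exists (proj1_sig e), e. auto. }
    assert (G0U : subgraph G0 U).
    { intros x r Hx. exists (proj1_sig e). split; [exists e; auto|]. apply (proj2_sig e), Hx. }
    exists (exist _ U (conj HU G0U)). intros e' Ae' x r Hx. exists (proj1_sig e'). eauto.
  - exists G. split; [|split]; auto. intros v Ev. apply NNPP. intro Gv.
    destruct (admissible_slope_exists G v HG Ev) as [c Hc].
    assert (GG' : subgraph G (graph_extend G v c)).
    { intros x r Hx. exists x, r, 0. rewrite vscal_zero_l, vadd_zero. split; auto. split; auto. ring. }
    assert (HG' := graph_extend_dominated G v c HG Ev (fun s Hs => Gv (ex_intro _ s Hs)) Hc).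
    apply Gv. exists c.
    apply (Gmax (exist _ (graph_extend G v c) (conj HG' (fun x r H => GG' x r (G0G x r H)))) GG').
    exists vzero, 0, 1. rewrite vscal_one, vadd_zero_l. split; [apply (graph_zero _ HG)|split; auto; ring].
Qed.

Theorem hahn_banach G0 : dominated_graph G0 ->
  exists F, linear_on E F /\ (forall x, E x -> F x <= p x) /\ (forall x r, G0 x r -> F x = r).
Proof.
  intros HG0. destruct (maximal_dominated_graph G0 HG0) as [G [HG [G0G Gtotal]]].
  set (F := fun v => epsilon (inhabits 0) (G v)).
  assert (GF : forall v, E v -> G v (F v)) by (intros v Ev; apply epsilon_spec, Gtotal, Ev).
  destruct E_subspace as [_ [Eadd Escal]].
  exists F. split; [split|split].
  - intros x y Ex Ey. apply (graph_functional _ HG (vadd x y)); [apply GF; auto|].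
    apply (graph_add _ HG); apply GF; auto.
  - intros a x Ex. apply (graph_functional _ HG (vscal a x)); [apply GF; auto|].
    apply (graph_scal _ HG), GF, Ex.
  - intros x Ex. apply (graph_le _ HG), GF, Ex.
  - intros x r Hx. apply (graph_functional _ HG x); [apply GF|apply G0G, Hx].
    apply (graph_in _ HG0 _ _ Hx).
Qed.

End HahnBanach.

Lemma hahn_banach_line (V : VectorSpace) (p : V -> R) (v : V) (c : R) :
  (forall x y, p (vadd x y) <= p x + p y) -> (forall a x, 0 <= a -> p (vscal a x) = a * p x) ->
  (forall a, a * c <= p (vscal a v)) ->
  exists F, linear_on (fun _ => True) F /\ (forall x, F x <= p x) /\ F v = c.
Proof.
  intros p_sub p_hom Hc.
  assert (p0 : p vzero = 0).
  { rewrite <- (vscal_zero_l _ vzero), p_hom by lra. ring. }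
  assert (line_functional : forall a b, vscal a v = vscal b v -> a * c = b * c).
  { assert (Hab : forall a b, vscal a v = vscal b v -> (a - b) * c <= 0).
    { intros a b E. rewrite <- p0. replace vzero with (vscal (a - b) v); [apply Hc|].
      unfold Rminus. rewrite vscal_add_l, E, <- vscal_add_l, Rplus_opp_r. apply vscal_zero_l. }
    intros a b E. pose proof (Hab a b E). pose proof (Hab b a (eq_sym E)). lra. }
  destruct (hahn_banach V (fun _ => True) p) with (G0 := fun x r => exists a, x = vscal a v /\ r = a * c)
    as [F [HF [Fp Fv]]]; auto.
  - split; auto.
  - split.
    + exists 0. rewrite vscal_zero_l. split; auto. ring.
    + intros x r y s [a [-> ->]] [b [-> ->]]. exists (a + b). rewrite vscal_add_l. split; auto. ring.
    + intros b x r [a [-> ->]]. exists (b * a). rewrite vscal_assoc. split; auto. ring.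
    + intros x r s [a [-> ->]] [b [E ->]]. apply line_functional, E.
    + auto.
    + intros x r [a [-> ->]]. apply Hc.
  - exists F. split; [|split]; auto. rewrite (Fv v c); auto. exists 1. rewrite vscal_one. split; auto. ring.
Qed.

(** * Normed spaces, bounded operators and their duals *)

Arguments add_assoc {_}. Arguments add_comm {_}. Arguments add_zero {_}. Arguments add_opp {_}.
Arguments scal_assoc {_}. Arguments scal_one {_}. Arguments scal_add_r {_}. Arguments scal_add_l {_}.
Arguments norm_eq_zero {_}. Arguments norm_triangle {_}. Arguments norm_scal {_}.

Lemma Rabs_le_iff a b : Rabs a <= b <-> -b <= a <= b.
Proof. unfold Rabs; destruct (Rcase_abs a); split; intros; lra. Qed.

Lemma Rabs_sign (sg : R) : sg * sg = 1 -> Rabs sg = 1.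
Proof.
  intro H. assert (Rabs sg * Rabs sg = 1) by (rewrite <- Rabs_mult, H; apply Rabs_R1).
  pose proof (Rabs_pos sg). nra.
Qed.

Section NormedSpaceTheory.
Context {N : NormedSpace}.
Implicit Types x y z : N.

Lemma add_zero_l x : add zero x = x.
Proof. rewrite add_comm; apply add_zero. Qed.

Lemma add_cancel_r x y z : add x z = add y z -> x = y.
Proof.
  intro H. rewrite <- (add_zero x), <- (add_zero y), <- (add_opp z), !add_assoc, H. reflexivity.
Qed.

Lemma scal_zero_l x : scal 0 x = zero.
Proof. apply (add_cancel_r _ _ (scal 0 x)). rewrite add_zero_l, <- scal_add_l, Rplus_0_l. reflexivity. Qed.

Lemma opp_scal x : opp x = scal (-1) x.
Proof.
  apply (add_cancel_r _ _ x). rewrite (add_comm (opp x)), add_opp.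
  rewrite <- (scal_one x) at 2. rewrite <- scal_add_l. replace (-1 + 1) with 0 by ring.
  symmetry; apply scal_zero_l.
Qed.

Lemma scal_zero_r a : scal a (@zero N) = zero.
Proof. rewrite <- (scal_zero_l zero), scal_assoc, Rmult_0_r. reflexivity. Qed.

Lemma scal_opp_opp x : scal (-1) (scal (-1) x) = x.
Proof. rewrite scal_assoc. replace (-1 * -1) with 1 by ring. apply scal_one. Qed.

Lemma norm_zero : norm (@zero N) = 0.
Proof. rewrite <- (scal_zero_l zero), norm_scal, Rabs_R0. ring. Qed.

Lemma norm_scal_m1 x : norm (scal (-1) x) = norm x.
Proof. rewrite norm_scal, (Rabs_sign (-1)) by ring. ring. Qed.

Lemma norm_opp x : norm (opp x) = norm x.
Proof. rewrite opp_scal. apply norm_scal_m1. Qed.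

Lemma norm_nonneg x : 0 <= norm x.
Proof. pose proof (norm_triangle x (opp x)). rewrite add_opp, norm_zero, norm_opp in H. lra. Qed.

Lemma norm_pos x : x <> zero -> 0 < norm x.
Proof. intro H. destruct (norm_nonneg x) as [h|h]; auto. exfalso; apply H, norm_eq_zero; auto. Qed.

Lemma norm_normalize x : x <> zero -> norm (scal (/ norm x) x) = 1.
Proof.
  intro Hx. pose proof (norm_pos x Hx).
  rewrite norm_scal, Rabs_pos_eq by (left; apply Rinv_0_lt_compat; auto).
  field. lra.
Qed.

Lemma sub_self x : sub x x = zero.
Proof. apply add_opp. Qed.

Lemma sub_eq x y : sub x y = zero -> x = y.
Proof. intro H. apply (add_cancel_r _ _ (opp y)). unfold sub in H. rewrite H, add_opp. reflexivity. Qed.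

Lemma add_sub x y : add (sub x y) y = x.
Proof. unfold sub. rewrite <- add_assoc, (add_comm (opp y)), add_opp, add_zero. reflexivity. Qed.

Lemma sub_add_add (a b c d : N) : sub (add a b) (add c d) = add (sub a c) (sub b d).
Proof.
  unfold sub. rewrite !opp_scal, scal_add_r, <- !add_assoc. f_equal.
  rewrite !add_assoc. f_equal. apply add_comm.
Qed.

Lemma sub_scal a x y : sub (scal a x) (scal a y) = scal a (sub x y).
Proof. unfold sub. rewrite !opp_scal, scal_add_r, !scal_assoc, Rmult_comm. reflexivity. Qed.

Lemma scal_sub_l a b x : sub (scal a x) (scal b x) = scal (a - b) x.
Proof. unfold sub. rewrite opp_scal, scal_assoc, <- scal_add_l. f_equal. ring. Qed.

Lemma add_swap (a b c d : N) : add (add a b) (add c d) = add (add a c) (add b d).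
Proof. rewrite <- !add_assoc. f_equal. rewrite !add_assoc. f_equal. apply add_comm. Qed.

Lemma norm_sub_sym x y : norm (sub x y) = norm (sub y x).
Proof.
  rewrite <- norm_scal_m1. unfold sub. rewrite opp_scal, scal_add_r, scal_opp_opp, add_comm, opp_scal.
  reflexivity.
Qed.

Lemma norm_reverse_triangle x y : Rabs (norm x - norm y) <= norm (sub x y).
Proof.
  apply Rabs_le_iff. pose proof (norm_triangle (sub x y) y). pose proof (norm_triangle (sub y x) x).
  rewrite add_sub in *. rewrite norm_sub_sym in H0. lra.
Qed.

Lemma scal_injective x a b : x <> zero -> scal a x = scal b x -> a = b.
Proof.
  intros Hx E. pose proof (norm_pos x Hx).
  assert (Hz : Rabs (a - b) * norm x = 0)
    by (rewrite <- norm_scal, <- scal_sub_l, E, sub_self, norm_zero; auto).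
  apply Rmult_integral in Hz. destruct Hz as [Hz|Hz]; [|lra].
  revert Hz. unfold Rabs. destruct Rcase_abs; lra.
Qed.

Lemma neq_scal_m1 x : x <> zero -> x <> scal (-1) x.
Proof. intros Hx E. rewrite <- (scal_one x) in E at 1. apply scal_injective in E; auto. lra. Qed.

End NormedSpaceTheory.

Definition vector_space_of (N : NormedSpace) : VectorSpace.
Proof.
  refine (Build_VectorSpace N zero add scal add_assoc add_comm add_zero _
    scal_assoc scal_one scal_add_r scal_add_l).
  intro x. rewrite <- opp_scal. apply add_opp.
Defined.

Definition vector_space_fun (X : Type) : VectorSpace.
Proof.
  refine (Build_VectorSpace (X -> R) (fun _ => 0) (fun f g x => f x + g x) (fun a f x => a * f x)
    _ _ _ _ _ _ _ _); intros; apply functional_extensionality; intros; ring.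
Defined.

Lemma strictly_increasing_ge phi : strictly_increasing phi -> forall n, (n <= phi n)%nat.
Proof. intros H n; induction n; [lia|]. specialize (H n). lia. Qed.

Lemma strictly_increasing_comp phi psi : strictly_increasing phi -> strictly_increasing psi ->
  strictly_increasing (fun n => phi (psi n)).
Proof.
  intros Hphi Hpsi n. specialize (Hpsi n). induction Hpsi as [|m _ IH]; [apply Hphi|].
  specialize (Hphi m). lia.
Qed.

Lemma strictly_increasing_id : strictly_increasing (fun n => n).
Proof. intro n; lia. Qed.

Lemma Un_cv_subseq (u : nat -> R) l phi : Un_cv u l -> strictly_increasing phi ->
  Un_cv (fun n => u (phi n)) l.
Proof.
  intros H Hphi eps He. destruct (H eps He) as [K HK]. exists K. intros n Hn.
  apply HK. pose proof (strictly_increasing_ge phi Hphi n). lia.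
Qed.

Lemma Un_cv_const (c : R) : Un_cv (fun _ => c) c.
Proof. intros eps He. exists O. intros. unfold Rdist. rewrite Rminus_diag, Rabs_R0. exact He. Qed.

Lemma Un_cv_le_const (u : nat -> R) l c : Un_cv u l -> (forall n, u n <= c) -> l <= c.
Proof.
  intros Hu Hc. apply Rnot_lt_le. intro H. destruct (Hu (l - c)) as [K HK]; [lra|].
  specialize (HK K (le_n K)). specialize (Hc K). unfold Rdist in HK. apply Rabs_def2 in HK. lra.
Qed.

Lemma Un_cv_ge_const (u : nat -> R) l c : Un_cv u l -> (forall n, c <= u n) -> c <= l.
Proof.
  intros Hu Hc. apply Ropp_le_cancel, (Un_cv_le_const (fun n => - u n)).
  - apply CV_opp, Hu.
  - intro n. apply Ropp_le_contravar, Hc.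
Qed.

Lemma Un_cv_squeeze (u e : nat -> R) l : Un_cv e 0 -> (forall n, Rabs (u n - l) <= e n) -> Un_cv u l.
Proof.
  intros He Hb eps Heps. destruct (He eps Heps) as [K HK]. exists K. intros n Hn.
  specialize (HK n Hn). unfold Rdist in *. rewrite Rminus_0_r in HK. specialize (Hb n).
  pose proof (Rle_abs (e n)). lra.
Qed.

Lemma Un_cv_dist (u : nat -> R) l : Un_cv u l -> Un_cv (fun n => Rabs (u n - l)) 0.
Proof.
  intros H eps He. destruct (H eps He) as [K HK]. exists K. intros n Hn.
  unfold Rdist in *. rewrite Rminus_0_r, Rabs_Rabsolu. auto.
Qed.

Lemma Un_cv_inv_succ : Un_cv (fun n => / INR (S n)) 0.
Proof.
  intros eps He. destruct (INR_unbounded (/ eps)) as [K HK]. exists K. intros n Hn.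
  unfold Rdist. rewrite Rminus_0_r. assert (0 < INR (S n)) by (apply lt_0_INR; lia).
  rewrite Rabs_right by (apply Rle_ge; left; apply Rinv_0_lt_compat; auto).
  assert (INR K <= INR (S n)) by (apply le_INR; lia).
  assert (0 < / eps) by (apply Rinv_0_lt_compat; auto).
  rewrite <- (Rinv_inv eps). apply Rinv_lt_contravar; [apply Rmult_lt_0_compat|]; lra.
Qed.

Lemma bolzano_weierstrass_subseq (u : nat -> R) M : (forall n, Rabs (u n) <= M) ->
  exists phi l, strictly_increasing phi /\ Un_cv (fun n => u (phi n)) l.
Proof.
  intros HM.
  destruct (Bolzano_Weierstrass u (fun c => -M <= c <= M) (compact_P3 (-M) M)) as [l Hl].
  { intro n. apply Rabs_le_iff, HM. }
  assert (close : forall mk : nat * nat, exists p, (fst mk <= p)%nat /\ Rabs (u p - l) < / INR (S (snd mk))).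
  { intros [m k]. assert (Hk : 0 < / INR (S k)) by (apply Rinv_0_lt_compat, lt_0_INR; lia).
    assert (Hnb : neighbourhood (disc l (mkposreal _ Hk)) l)
      by (exists (mkposreal _ Hk); intros y Hy; exact Hy).
    destruct (Hl _ m Hnb) as [p [Hp Hd]]. exists p. split; auto. }
  destruct (choice _ close) as [next next_spec].
  set (phi := fix phi n := match n with O => next (O, O) | S m => next (S (phi m), S m) end).
  exists phi, l. split.
  - intro n. simpl. destruct (next_spec (S (phi n), S n)). simpl in *. lia.
  - apply (Un_cv_squeeze _ _ _ Un_cv_inv_succ). intro n. left. destruct n; apply (next_spec (_, _)).
Qed.

Section NormedSequences.
Context {N : NormedSpace}.

Lemma seq_converges_subseq (u : nat -> N) l phi : seq_converges u l -> strictly_increasing phi ->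
  seq_converges (fun n => u (phi n)) l.
Proof.
  intros H Hphi eps He. destruct (H eps He) as [K HK]. exists K. intros n Hn.
  apply HK. pose proof (strictly_increasing_ge phi Hphi n). lia.
Qed.

Lemma seq_converges_dist (u : nat -> N) l : seq_converges u l -> Un_cv (fun n => norm (sub (u n) l)) 0.
Proof.
  intros H eps He. destruct (H eps He) as [K HK]. exists K. intros n Hn. unfold Rdist.
  rewrite Rminus_0_r, Rabs_right by (apply Rle_ge, norm_nonneg). auto.
Qed.

Lemma seq_converges_norm (u : nat -> N) l : seq_converges u l -> Un_cv (fun n => norm (u n)) (norm l).
Proof.
  intro H. apply (Un_cv_squeeze _ _ _ (seq_converges_dist u l H)). intro n. apply norm_reverse_triangle.
Qed.

Lemma seq_converges_add (u v : nat -> N) a b : seq_converges u a -> seq_converges v b ->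
  seq_converges (fun n => add (u n) (v n)) (add a b).
Proof.
  intros H1 H2 eps He. destruct (H1 (eps/2)) as [K1 HK1]; [lra|]. destruct (H2 (eps/2)) as [K2 HK2]; [lra|].
  exists (max K1 K2). intros n Hn. rewrite sub_add_add. eapply Rle_lt_trans; [apply norm_triangle|].
  specialize (HK1 n ltac:(lia)). specialize (HK2 n ltac:(lia)). lra.
Qed.

Lemma seq_converges_scal (u : nat -> N) a c : seq_converges u a ->
  seq_converges (fun n => scal c (u n)) (scal c a).
Proof.
  intros H eps He. pose proof (Rabs_pos c).
  destruct (H (eps / (Rabs c + 1))) as [K HK]; [apply Rdiv_lt_0_compat; lra|].
  exists K. intros n Hn. rewrite sub_scal, norm_scal. specialize (HK n Hn).
  apply Rle_lt_trans with ((Rabs c + 1) * norm (sub (u n) a)).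
  - apply Rmult_le_compat_r; [apply norm_nonneg|lra].
  - apply Rmult_lt_compat_l with (r := Rabs c + 1) in HK; [|lra].
    replace ((Rabs c + 1) * (eps / (Rabs c + 1))) with eps in HK by (field; lra). exact HK.
Qed.

Lemma seq_converges_scal_l (a : nat -> R) c (y : N) : Un_cv a c ->
  seq_converges (fun n => scal (a n) y) (scal c y).
Proof.
  intros H eps He. pose proof (norm_nonneg y).
  destruct (H (eps / (norm y + 1))) as [K HK]; [apply Rdiv_lt_0_compat; lra|].
  exists K. intros n Hn. rewrite scal_sub_l, norm_scal. specialize (HK n Hn). unfold Rdist in HK.
  pose proof (Rabs_pos (a n - c)).
  apply Rle_lt_trans with (Rabs (a n - c) * (norm y + 1)); [apply Rmult_le_compat_l; lra|].
  apply Rmult_lt_compat_r with (r := norm y + 1) in HK; [|lra].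
  replace (eps / (norm y + 1) * (norm y + 1)) with eps in HK by (field; lra). exact HK.
Qed.

End NormedSequences.

Section SupOnBall.
Context {X : NormedSpace}.
Implicit Types h k : X -> R.

Definition bounded_on_ball h := exists C, forall x, norm x <= 1 -> h x <= C.

Lemma sup_on_ball_lub h : bounded_on_ball h ->
  is_lub (fun s => exists x : X, norm x <= 1 /\ s = h x) (sup_on_ball h).
Proof.
  intros [C HC]. unfold sup_on_ball. apply epsilon_spec.
  destruct (completeness (fun s => exists x : X, norm x <= 1 /\ s = h x)) as [m Hm].
  - exists C. intros s [x [Hx ->]]. auto.
  - exists (h zero), zero. rewrite norm_zero. split; auto; lra.
  - exists m. exact Hm.
Qed.

Lemma sup_on_ball_ub h x : bounded_on_ball h -> norm x <= 1 -> h x <= sup_on_ball h.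
Proof. intros Hh Hx. apply (sup_on_ball_lub h Hh). exists x; auto. Qed.

Lemma sup_on_ball_le h c : bounded_on_ball h ->
  (forall x, norm x <= 1 -> h x <= c) -> sup_on_ball h <= c.
Proof. intros Hh H. apply (sup_on_ball_lub h Hh). intros s [x [Hx ->]]. auto. Qed.

Lemma sup_on_ball_nonneg h : bounded_on_ball h -> (forall x, 0 <= h x) -> 0 <= sup_on_ball h.
Proof.
  intros Hh H0. apply Rle_trans with (h zero); auto. apply sup_on_ball_ub; auto.
  rewrite norm_zero; lra.
Qed.

Lemma sup_on_ball_bound h x : bounded_on_ball h -> (forall a y, h (scal a y) = Rabs a * h y) ->
  h x <= sup_on_ball h * norm x.
Proof.
  intros Hh Hhom. destruct (classic (x = zero)) as [->|Hx].
  - assert (h zero = 0) by (rewrite <- (scal_zero_l zero) at 1; rewrite Hhom, Rabs_R0; ring).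
    rewrite H, norm_zero. lra.
  - pose proof (norm_pos x Hx). pose proof (Rinv_0_lt_compat _ H).
    assert (H1 : h (scal (/ norm x) x) <= sup_on_ball h)
      by (apply sup_on_ball_ub; [|rewrite norm_normalize]; auto; lra).
    rewrite Hhom, Rabs_pos_eq in H1 by lra.
    apply Rmult_le_compat_r with (r := norm x) in H1; [|lra].
    rewrite Rmult_comm, <- Rmult_assoc, Rinv_r, Rmult_1_l in H1 by lra. exact H1.
Qed.

Lemma sup_on_ball_scal h c : bounded_on_ball h -> (forall x, 0 <= h x) -> 0 <= c ->
  sup_on_ball (fun x => c * h x) = c * sup_on_ball h.
Proof.
  intros Hh H0 Hc. destruct Hh as [C HC].
  assert (Hch : bounded_on_ball (fun x => c * h x))
    by (exists (c * C); intros x Hx; apply Rmult_le_compat_l; auto).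
  apply Rle_antisym.
  - apply sup_on_ball_le; auto. intros x Hx. apply Rmult_le_compat_l; auto.
    apply sup_on_ball_ub; [exists C|]; auto.
  - destruct Hc as [Hc|<-].
    + assert (Hle : sup_on_ball h <= / c * sup_on_ball (fun x => c * h x)).
      { apply sup_on_ball_le; [exists C; auto|]. intros x Hx.
        replace (h x) with (/ c * (c * h x)) by (field; lra).
        apply Rmult_le_compat_l; [left; apply Rinv_0_lt_compat; lra|].
        apply (sup_on_ball_ub (fun x => c * h x)); auto. }
      apply Rmult_le_compat_l with (r := c) in Hle; [|lra].
      rewrite <- Rmult_assoc, Rinv_r, Rmult_1_l in Hle by lra. exact Hle.
    + rewrite Rmult_0_l. apply sup_on_ball_nonneg; auto. intro. rewrite Rmult_0_l. lra.
Qed.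

End SupOnBall.

Section Operators.
Context {X Y : NormedSpace}.
Implicit Types T A B : X -> Y.

Lemma linear_map_zero T : linear_map T -> T zero = zero.
Proof. intros [_ Hs]. rewrite <- (scal_zero_l zero), Hs, scal_zero_l. reflexivity. Qed.

Definition bounded_op T := linear_map T /\ exists C, forall x, norm (T x) <= C * norm x.

Lemma bounded_op_on_ball T : bounded_op T -> bounded_on_ball (fun x => norm (T x)).
Proof.
  intros [_ [C HC]]. exists (Rabs C). intros x Hx. eapply Rle_trans; [apply HC|].
  pose proof (norm_nonneg x). pose proof (Rabs_pos C). pose proof (Rle_abs C). nra.
Qed.

Lemma op_norm_ub T x : bounded_op T -> norm x <= 1 -> norm (T x) <= op_norm T.
Proof. intros HT. apply (sup_on_ball_ub (fun x => norm (T x))), bounded_op_on_ball, HT. Qed.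

Lemma op_norm_le T c : bounded_op T -> (forall x, norm x <= 1 -> norm (T x) <= c) -> op_norm T <= c.
Proof. intros HT. apply (sup_on_ball_le (fun x => norm (T x))), bounded_op_on_ball, HT. Qed.

Lemma op_norm_nonneg T : bounded_op T -> 0 <= op_norm T.
Proof.
  intros HT. apply (sup_on_ball_nonneg (fun x => norm (T x))); [apply bounded_op_on_ball, HT|].
  intro; apply norm_nonneg.
Qed.

Lemma op_norm_bound T x : bounded_op T -> norm (T x) <= op_norm T * norm x.
Proof.
  intros HT. apply (sup_on_ball_bound (fun x => norm (T x))); [apply bounded_op_on_ball, HT|].
  intros a y. rewrite (proj2 (proj1 HT)). apply norm_scal.
Qed.

Lemma op_norm_pos T : bounded_op T -> T <> op_zero -> 0 < op_norm T.
Proof.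
  intros HT HT0. destruct (classic (exists x, T x <> zero)) as [[x Hx]|Hn].
  - pose proof (op_norm_bound T x HT). pose proof (norm_pos _ Hx).
    destruct (op_norm_nonneg T HT) as [|E]; auto. rewrite <- E in H. nra.
  - exfalso. apply HT0. apply functional_extensionality. intro x. apply NNPP. intro H. apply Hn. eauto.
Qed.

Lemma bounded_op_add T A : bounded_op T -> bounded_op A -> bounded_op (op_add T A).
Proof.
  intros [[Ta Ts] [C1 H1]] [[Aa As] [C2 H2]]. split; [split|]; unfold op_add.
  - intros x y. rewrite Ta, Aa. apply add_swap.
  - intros a x. rewrite Ts, As, scal_add_r. reflexivity.
  - exists (C1 + C2). intro x. eapply Rle_trans; [apply norm_triangle|].
    specialize (H1 x). specialize (H2 x). lra.
Qed.

Lemma bounded_op_scal T a : bounded_op T -> bounded_op (op_scal a T).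
Proof.
  intros [[Ta Ts] [C H]]. split; [split|]; unfold op_scal.
  - intros x y. rewrite Ta, scal_add_r. reflexivity.
  - intros b x. rewrite Ts, !scal_assoc, Rmult_comm. reflexivity.
  - exists (Rabs a * C). intro x. rewrite norm_scal, Rmult_assoc.
    apply Rmult_le_compat_l; [apply Rabs_pos|apply H].
Qed.

Lemma op_norm_scal T a : bounded_op T -> op_norm (op_scal a T) = Rabs a * op_norm T.
Proof.
  intros HT. unfold op_norm, op_scal.
  rewrite <- sup_on_ball_scal; [|apply bounded_op_on_ball, HT|intro; apply norm_nonneg|apply Rabs_pos].
  f_equal. apply functional_extensionality. intro x. apply norm_scal.
Qed.

Lemma compact_op_bounded T : compact_op T -> bounded_op T.
Proof.
  intros [HL HC]. split; auto. apply NNPP. intro Hunb.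
  assert (Hx : forall n : nat, exists x, norm x = 1 /\ INR n < norm (T x)).
  { intro n. apply NNPP. intro H. apply Hunb. exists (INR n). intro x.
    destruct (classic (x = zero)) as [->|Hx].
    - rewrite linear_map_zero, !norm_zero by auto. lra.
    - apply Rnot_lt_le. intro Hlt. apply H. exists (scal (/ norm x) x). split; [apply norm_normalize; auto|].
      pose proof (norm_pos _ Hx).
      rewrite (proj2 HL), norm_scal, Rabs_pos_eq by (left; apply Rinv_0_lt_compat; lra).
      apply Rmult_lt_reg_l with (norm x); auto. rewrite <- Rmult_assoc, Rinv_r by lra. lra. }
  destruct (choice _ Hx) as [u Hu].
  destruct (HC u) as [phi [l [Hphi Hl]]]; [intro n; rewrite (proj1 (Hu n)); lra|].
  destruct (seq_converges_norm _ _ Hl 1) as [K HK]; [lra|].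
  destruct (INR_unbounded (norm l + 1)) as [K2 HK2].
  set (n := max K K2). specialize (HK n ltac:(unfold n; lia)). unfold Rdist in HK.
  apply Rabs_def2 in HK. pose proof (proj2 (Hu (phi n))).
  pose proof (strictly_increasing_ge phi Hphi n).
  assert (INR K2 <= INR (phi n)) by (apply le_INR; unfold n in *; lia). lra.
Qed.

Lemma compact_op_add T A : compact_op T -> compact_op A -> compact_op (op_add T A).
Proof.
  intros HT HA. split; [apply bounded_op_add; apply compact_op_bounded; auto|].
  intros u Hu. destruct (proj2 HT u Hu) as [p1 [l1 [Hp1 Hl1]]].
  destruct (proj2 HA (fun n => u (p1 n))) as [p2 [l2 [Hp2 Hl2]]]; [intro; apply Hu|].
  exists (fun n => p1 (p2 n)), (add l1 l2). split; [apply strictly_increasing_comp; auto|].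
  apply seq_converges_add; auto. apply (seq_converges_subseq (fun n => T (u (p1 n)))); auto.
Qed.

Lemma compact_op_scal T a : compact_op T -> compact_op (op_scal a T).
Proof.
  intros HT. split; [apply bounded_op_scal; apply compact_op_bounded; auto|].
  intros u Hu. destruct (proj2 HT u Hu) as [p1 [l1 [Hp1 Hl1]]].
  exists p1, (scal a l1). split; auto. apply seq_converges_scal; auto.
Qed.

End Operators.

Section Functionals.
Context {N : NormedSpace}.
Implicit Types f g : N -> R.

Lemma linear_functional_zero f : linear_functional f -> f zero = 0.
Proof. intros [_ Hs]. rewrite <- (scal_zero_l zero), Hs. ring. Qed.

Lemma linear_functional_sub f x y : linear_functional f -> f (sub x y) = f x - f y.
Proof. intros [Ha Hs]. unfold sub. rewrite Ha, opp_scal, Hs. ring. Qed.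

Lemma in_dual_on_ball f : in_dual f -> bounded_on_ball (fun x => Rabs (f x)).
Proof.
  intros [_ [C HC]]. exists (Rabs C). intros x Hx. eapply Rle_trans; [apply HC|].
  pose proof (norm_nonneg x). pose proof (Rabs_pos C). pose proof (Rle_abs C). nra.
Qed.

Lemma dual_norm_ub f x : in_dual f -> norm x <= 1 -> Rabs (f x) <= dual_norm f.
Proof. intros Hf. apply (sup_on_ball_ub (fun x => Rabs (f x))), in_dual_on_ball, Hf. Qed.

Lemma dual_norm_le f c : in_dual f -> (forall x, norm x <= 1 -> Rabs (f x) <= c) -> dual_norm f <= c.
Proof. intros Hf. apply (sup_on_ball_le (fun x => Rabs (f x))), in_dual_on_ball, Hf. Qed.

Lemma dual_norm_bound f x : in_dual f -> Rabs (f x) <= dual_norm f * norm x.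
Proof.
  intros Hf. apply (sup_on_ball_bound (fun x => Rabs (f x))); [apply in_dual_on_ball, Hf|].
  intros a y. rewrite (proj2 (proj1 Hf)). apply Rabs_mult.
Qed.

Lemma in_dual_add f g : in_dual f -> in_dual g -> in_dual (fun x => f x + g x).
Proof.
  intros [[fa fs] [C1 H1]] [[ga gs] [C2 H2]]. split; [split|].
  - intros. rewrite fa, ga. ring.
  - intros. rewrite fs, gs. ring.
  - exists (C1 + C2). intro x. eapply Rle_trans; [apply Rabs_triang|].
    specialize (H1 x). specialize (H2 x). lra.
Qed.

Lemma in_dual_scal f a : in_dual f -> in_dual (fun x => a * f x).
Proof.
  intros [[fa fs] [C H]]. split; [split|].
  - intros. rewrite fa. ring.
  - intros. rewrite fs. ring.
  - exists (Rabs a * C). intro x. rewrite Rabs_mult, Rmult_assoc.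
    apply Rmult_le_compat_l; [apply Rabs_pos|apply H].
Qed.

Lemma in_dual_zero : in_dual (fun _ : N => 0).
Proof. split; [split|]; intros; try ring. exists 0. intros. rewrite Rabs_R0. lra. Qed.

Lemma dual_norm_add f g : in_dual f -> in_dual g ->
  dual_norm (fun x => f x + g x) <= dual_norm f + dual_norm g.
Proof.
  intros Hf Hg. apply dual_norm_le; [apply in_dual_add; auto|]. intros x Hx.
  eapply Rle_trans; [apply Rabs_triang|]. apply Rplus_le_compat; apply dual_norm_ub; auto.
Qed.

Lemma dual_norm_scal f a : in_dual f -> dual_norm (fun x => a * f x) = Rabs a * dual_norm f.
Proof.
  intros Hf. unfold dual_norm.
  rewrite <- sup_on_ball_scal; [|apply in_dual_on_ball, Hf|intro; apply Rabs_pos|apply Rabs_pos].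
  f_equal. apply functional_extensionality. intro x. apply Rabs_mult.
Qed.

Lemma in_dual_continuous f (u : nat -> N) a : in_dual f -> seq_converges u a ->
  Un_cv (fun n => f (u n)) (f a).
Proof.
  intros Hf Hu. apply (Un_cv_squeeze _ (fun n => dual_norm f * norm (sub (u n) a))).
  - rewrite <- (Rmult_0_r (dual_norm f)). apply CV_mult; [apply Un_cv_const|apply seq_converges_dist, Hu].
  - intro n. rewrite <- linear_functional_sub by apply Hf. apply dual_norm_bound, Hf.
Qed.

Definition in_dual_ball f := linear_functional f /\ forall x, Rabs (f x) <= norm x.

Lemma in_dual_ball_moving_limit (k : nat -> N -> R) (b : nat -> N) bl L :
  (forall n, in_dual_ball (k n)) -> seq_converges b bl ->
  (Un_cv (fun n => k n (b n)) L <-> Un_cv (fun n => k n bl) L).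
Proof.
  intros Hk Hb.
  assert (close : forall n, Rabs (k n (b n) - k n bl) <= norm (sub (b n) bl))
    by (intro n; rewrite <- linear_functional_sub by apply Hk; apply Hk).
  split; intro H.
  - apply (Un_cv_squeeze _ (fun n => Rabs (k n (b n) - L) + norm (sub (b n) bl))).
    + rewrite <- (Rplus_0_r 0). apply CV_plus; [apply Un_cv_dist, H|apply seq_converges_dist, Hb].
    + intro n. specialize (close n). rewrite Rabs_minus_sym in close.
      replace (k n bl - L) with ((k n bl - k n (b n)) + (k n (b n) - L)) by ring.
      eapply Rle_trans; [apply Rabs_triang|]. lra.
  - apply (Un_cv_squeeze _ (fun n => Rabs (k n bl - L) + norm (sub (b n) bl))).
    + rewrite <- (Rplus_0_r 0). apply CV_plus; [apply Un_cv_dist, H|apply seq_converges_dist, Hb].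
    + intro n. specialize (close n).
      replace (k n (b n) - L) with ((k n (b n) - k n bl) + (k n bl - L)) by ring.
      eapply Rle_trans; [apply Rabs_triang|]. lra.
Qed.

Definition supports f (y : N) := in_dual_ball f /\ f y = norm y.

Lemma in_dual_ball_in_dual f : in_dual_ball f -> in_dual f.
Proof. intros [Hl Hb]. split; auto. exists 1. intro. rewrite Rmult_1_l. apply Hb. Qed.

Lemma dual_norm_le_1 f : in_dual_ball f -> dual_norm f <= 1.
Proof.
  intros Hf. apply dual_norm_le; [apply in_dual_ball_in_dual, Hf|]. intros x Hx.
  eapply Rle_trans; [apply Hf|exact Hx].
Qed.

Lemma in_dual_ball_scal f a x : in_dual_ball f -> f (scal a x) = a * f x.
Proof. intros [[_ Hs] _]. apply Hs. Qed.

Lemma in_dual_ball_add_scal f a x y : in_dual_ball f -> f (add x (scal a y)) = f x + a * f y.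
Proof. intros [[Ha Hs] _]. rewrite Ha, Hs. reflexivity. Qed.

Lemma in_dual_ball_sign f sg : sg * sg = 1 -> in_dual_ball f -> in_dual_ball (fun v => sg * f v).
Proof.
  intros Hsg [[Ha Hs] Hb]. split; [split|].
  - intros. rewrite Ha. ring.
  - intros. rewrite Hs. ring.
  - intro x. rewrite Rabs_mult, Rabs_sign, Rmult_1_l by exact Hsg. apply Hb.
Qed.

Lemma dominated_in_dual_ball f :
  linear_on (V := vector_space_of N) (fun _ => True) f -> (forall x, f x <= norm x) -> in_dual_ball f.
Proof.
  intros [Ha Hs] Hle. split; [split|].
  - intros x y. apply (Ha x y I I).
  - intros a x. apply (Hs a x I).
  - intro x. apply Rabs_le_iff. pose proof (Hle (scal (-1) x)) as Hm.
    change (f (@vscal (vector_space_of N) (-1) x) <= norm (scal (-1) x)) in Hm.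
    rewrite (Hs (-1) x I) in Hm. split; [|apply Hle]. simpl in Hm. rewrite norm_scal_m1 in Hm. lra.
Qed.

Lemma supports_exists (y : N) : exists f, supports f y.
Proof.
  destruct (hahn_banach_line (vector_space_of N) norm y (norm y)) as [f [Hf [Hle Hfy]]].
  - apply norm_triangle.
  - intros a x Ha. simpl. rewrite norm_scal, Rabs_pos_eq by exact Ha. reflexivity.
  - intro a. simpl. rewrite norm_scal. apply Rmult_le_compat_r; [apply norm_nonneg|apply Rle_abs].
  - exists f. split; auto. apply dominated_in_dual_ball; auto.
Qed.

Lemma separation (v : N) : (forall f, in_dual_ball f -> f v = 0) -> v = zero.
Proof.
  intros H. destruct (supports_exists v) as [f [Hf Hfv]]. apply norm_eq_zero. rewrite <- Hfv. apply H, Hf.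
Qed.

End Functionals.

(** * Reflexivity *)

Lemma in_dual_comp {X Y : NormedSpace} (g : Y -> R) (B : X -> Y) :
  bounded_op B -> in_dual g -> in_dual (fun x => g (B x)).
Proof.
  intros HB Hg. split; [split|].
  - intros a b. rewrite (proj1 (proj1 HB)). apply (proj1 (proj1 Hg)).
  - intros c a. rewrite (proj2 (proj1 HB)). apply (proj2 (proj1 Hg)).
  - exists (dual_norm g * op_norm B). intro x. eapply Rle_trans; [apply dual_norm_bound, Hg|].
    rewrite Rmult_assoc. apply Rmult_le_compat_l; [|apply op_norm_bound, HB].
    apply (sup_on_ball_nonneg (fun y => Rabs (g y))); [apply in_dual_on_ball, Hg|intro; apply Rabs_pos].
Qed.

Lemma reflexive_dominated_functional {X : NormedSpace} (F : (X -> R) -> R) : reflexive X ->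
  linear_on (V := vector_space_fun X) in_dual F -> (forall f, in_dual f -> F f <= dual_norm f) ->
  exists x, norm x <= 1 /\ forall f, in_dual f -> F f = f x.
Proof.
  intros HXr [Fa Fs] Fle. destruct (HXr F) as [x Hx].
  - intros f g Hf Hg. apply (Fa f g Hf Hg).
  - intros a f Hf. apply (Fs a f Hf).
  - exists 1. intros f Hf. rewrite Rmult_1_l. apply Rabs_le_iff. split; [|apply Fle; auto].
    pose proof (Fle _ (in_dual_scal f (-1) Hf)) as Hm.
    change (F (@vscal (vector_space_fun X) (-1) f) <= dual_norm (fun x => -1 * f x)) in Hm.
    rewrite (Fs (-1) f Hf), dual_norm_scal, (Rabs_sign (-1)) in Hm by (auto; ring). lra.
  - exists x. split; auto.
    destruct (supports_exists x) as [k [Hk Hkx]]. rewrite <- Hkx, <- Hx by (apply in_dual_ball_in_dual, Hk).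
    eapply Rle_trans; [apply Fle, in_dual_ball_in_dual, Hk|]. apply dual_norm_le_1, Hk.
Qed.

Definition dual_span {X Y : NormedSpace} (T A : X -> Y) (f : X -> R) :=
  exists g h, in_dual g /\ in_dual h /\ forall x, f x = g (T x) + h (A x).

Lemma limit_graph_dominated {X Y : NormedSpace} (T A : X -> Y) (u : nat -> X) :
  bounded_op T -> bounded_op A -> (forall n, norm (u n) <= 1) ->
  dominated_graph (vector_space_fun X) in_dual dual_norm
    (fun f r => dual_span T A f /\ Un_cv (fun n => f (u n)) r).
Proof.
  intros HT HA Hu.
  assert (span_in_dual : forall f, dual_span T A f -> in_dual f).
  { intros f [g [h [Hg [Hh Hf]]]]. replace f with (fun x => g (T x) + h (A x))
      by (apply functional_extensionality; intro; rewrite Hf; reflexivity).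
    apply in_dual_add; apply in_dual_comp; auto. }
  split; simpl.
  - split; [|apply Un_cv_const]. exists (fun _ => 0), (fun _ => 0).
    split; [apply in_dual_zero|split; [apply in_dual_zero|intro; ring]].
  - intros f1 r1 f2 r2 [[g1 [h1 [Hg1 [Hh1 E1]]]] L1] [[g2 [h2 [Hg2 [Hh2 E2]]]] L2].
    split; [|apply CV_plus; auto]. exists (fun v => g1 v + g2 v), (fun v => h1 v + h2 v).
    split; [apply in_dual_add; auto|split; [apply in_dual_add; auto|]]. intro. rewrite E1, E2. ring.
  - intros a f r [[g [h [Hg [Hh E]]]] L]. split; [|apply CV_mult; [apply Un_cv_const|exact L]].
    exists (fun v => a * g v), (fun v => a * h v).
    split; [apply in_dual_scal; auto|split; [apply in_dual_scal; auto|]]. intro. rewrite E. ring.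
  - intros f r s [_ Lr] [_ Ls]. apply (UL_sequence _ _ _ Lr Ls).
  - intros f r [Hf _]. apply span_in_dual, Hf.
  - intros f r [Hf L]. pose proof (span_in_dual f Hf) as Hfd. apply (Un_cv_le_const _ _ _ L). intro n.
    eapply Rle_trans; [apply Rle_abs|]. apply dual_norm_ub; auto.
Qed.

(* The functional [f |-> lim f (u n)] on the span of the [g o T] and [h o A] extends by Hahn-Banach
   to the dual; by reflexivity it is evaluation at some [x]. *)
Lemma reflexive_joint_limit {X Y : NormedSpace} (T A : X -> Y) (u : nat -> X) y z :
  reflexive X -> bounded_op T -> bounded_op A -> (forall n, norm (u n) <= 1) ->
  seq_converges (fun n => T (u n)) y -> seq_converges (fun n => A (u n)) z ->
  exists x, norm x <= 1 /\ T x = y /\ A x = z.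
Proof.
  intros HXr HT HA Hu Hy Hz.
  destruct (hahn_banach (vector_space_fun X) in_dual dual_norm) with
    (G0 := fun f r => dual_span T A f /\ Un_cv (fun n => f (u n)) r) as [F [HF [Fle FG]]].
  - split; [apply in_dual_zero|split]; simpl; [intros f g; apply in_dual_add|intros a f; apply in_dual_scal].
  - apply dual_norm_add.
  - intros a f Ha Hf. simpl. rewrite dual_norm_scal, Rabs_pos_eq; auto.
  - apply limit_graph_dominated; auto.
  - destruct (reflexive_dominated_functional F HXr HF Fle) as [x [Hx Fx]].
    exists x. split; [exact Hx|split]; apply sub_eq, separation; intros g Hg;
      pose proof (in_dual_ball_in_dual g Hg) as Hgd;
      rewrite linear_functional_sub by apply Hg.
    + rewrite <- (Fx (fun x => g (T x))) by (apply in_dual_comp; auto).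
      rewrite (FG _ (g y)); [ring|]. split; [|apply in_dual_continuous; auto].
      exists g, (fun _ => 0). split; [|split; [apply in_dual_zero|intro; ring]]. exact Hgd.
    + rewrite <- (Fx (fun x => g (A x))) by (apply in_dual_comp; auto).
      rewrite (FG _ (g z)); [ring|]. split; [|apply in_dual_continuous; auto].
      exists (fun _ => 0), g. split; [apply in_dual_zero|split; [exact Hgd|intro; ring]].
Qed.

(** * Directional derivatives of the norm and Smulian's lemma *)

Section NormDerivative.
Context {Y : NormedSpace}.
Variable y0 : Y.

Definition norm_slope (v : Y) (s : R) := (norm (add y0 (scal s v)) - norm y0) / s.

Definition norm_derivative (v : Y) :=
  - epsilon (inhabits 0) (is_lub (fun r => exists s, 0 < s /\ r = - norm_slope v s)).

Lemma norm_slope_lower v s : 0 < s -> - norm v <= norm_slope v s.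
Proof.
  intro Hs. unfold norm_slope. apply Rmult_le_reg_l with s; auto.
  replace (s * ((norm (add y0 (scal s v)) - norm y0) / s)) with (norm (add y0 (scal s v)) - norm y0)
    by (field; lra).
  pose proof (norm_triangle (add y0 (scal s v)) (scal (-s) v)).
  rewrite <- add_assoc, <- scal_add_l, Rplus_opp_r, scal_zero_l, add_zero, norm_scal, Rabs_Ropp,
    Rabs_right in H by lra. lra.
Qed.

Lemma norm_slope_mono v s t : 0 < s -> s <= t -> norm_slope v s <= norm_slope v t.
Proof.
  intros Hs Hst. unfold norm_slope.
  assert (Hconv : add y0 (scal s v) = add (scal (1 - s / t) y0) (scal (s / t) (add y0 (scal t v)))).
  { rewrite scal_add_r, scal_assoc, add_assoc, <- scal_add_l.
    replace (1 - s / t + s / t) with 1 by ring. rewrite scal_one. f_equal. f_equal. field. lra. }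
  assert (s / t <= 1) by (apply Rmult_le_reg_l with t; [lra|]; field_simplify; lra).
  assert (0 < s / t) by (apply Rdiv_lt_0_compat; lra).
  assert (Hn : norm (add y0 (scal s v)) <= (1 - s / t) * norm y0 + s / t * norm (add y0 (scal t v))).
  { rewrite Hconv. eapply Rle_trans; [apply norm_triangle|]. rewrite !norm_scal, !Rabs_pos_eq by lra. lra. }
  apply Rmult_le_reg_l with s; auto.
  replace (s * ((norm (add y0 (scal s v)) - norm y0) / s)) with (norm (add y0 (scal s v)) - norm y0)
    by (field; lra).
  replace (s * ((norm (add y0 (scal t v)) - norm y0) / t)) with (s / t * (norm (add y0 (scal t v)) - norm y0))
    by (field; lra).
  lra.
Qed.

Lemma norm_derivative_glb v :
  (forall s, 0 < s -> norm_derivative v <= norm_slope v s) /\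
  (forall eps, 0 < eps -> exists s, 0 < s /\ norm_slope v s < norm_derivative v + eps).
Proof.
  unfold norm_derivative.
  set (S := fun r => exists s, 0 < s /\ r = - norm_slope v s).
  assert (HL : is_lub S (epsilon (inhabits 0) (is_lub S))).
  { apply epsilon_spec. destruct (completeness S) as [L HL].
    - exists (norm v). intros r [s [Hs ->]]. pose proof (norm_slope_lower v s Hs). lra.
    - exists (- norm_slope v 1), 1. split; auto; lra.
    - exists L. exact HL. }
  split.
  - intros s Hs. assert (- norm_slope v s <= epsilon (inhabits 0) (is_lub S)) by (apply HL; exists s; auto).
    lra.
  - intros eps He. apply NNPP. intro Hn.
    assert (epsilon (inhabits 0) (is_lub S) <= epsilon (inhabits 0) (is_lub S) - eps); [|lra].
    apply HL. intros r [s [Hs ->]]. apply Rnot_lt_le. intro H. apply Hn. exists s. split; auto. lra.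
Qed.

Lemma norm_derivative_le v s : 0 < s -> norm_derivative v <= norm_slope v s.
Proof. apply norm_derivative_glb. Qed.

Lemma norm_derivative_approx v eps : 0 < eps ->
  exists s, 0 < s /\ norm_slope v s < norm_derivative v + eps.
Proof. apply norm_derivative_glb. Qed.

Lemma norm_derivative_le_norm v : norm_derivative v <= norm v.
Proof.
  eapply Rle_trans; [apply (norm_derivative_le v 1); lra|]. unfold norm_slope.
  pose proof (norm_triangle y0 (scal 1 v)). rewrite scal_one in *. lra.
Qed.

Lemma norm_derivative_zero : norm_derivative zero = 0.
Proof.
  assert (slope0 : forall s, 0 < s -> norm_slope zero s = 0).
  { intros s Hs. unfold norm_slope. rewrite scal_zero_r, add_zero. field. lra. }
  apply Rle_antisym.
  - rewrite <- (slope0 1) by lra. apply norm_derivative_le; lra.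
  - apply Rnot_lt_le. intro H. destruct (norm_derivative_approx zero (- norm_derivative zero)) as [s [Hs Hq]].
    + lra.
    + rewrite slope0 in Hq; auto. lra.
Qed.

Lemma norm_derivative_homogeneous a v : 0 <= a -> norm_derivative (scal a v) = a * norm_derivative v.
Proof.
  intros [Ha|<-]; [|rewrite scal_zero_l, norm_derivative_zero; ring].
  assert (slope_scal : forall s, 0 < s -> norm_slope (scal a v) s = a * norm_slope v (s * a)).
  { intros s Hs. unfold norm_slope. rewrite scal_assoc. field. lra. }
  apply Rle_antisym.
  - apply Rnot_lt_le. intro H.
    destruct (norm_derivative_approx v ((norm_derivative (scal a v) - a * norm_derivative v) / a))
      as [s [Hs Hq]]; [apply Rdiv_lt_0_compat; lra|].
    assert (H1 := norm_derivative_le (scal a v) (s / a) ltac:(apply Rdiv_lt_0_compat; lra)).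
    rewrite slope_scal in H1 by (apply Rdiv_lt_0_compat; lra).
    replace (s / a * a) with s in H1 by (field; lra).
    apply Rmult_lt_compat_l with (r := a) in Hq; auto.
    replace (a * (norm_derivative v + (norm_derivative (scal a v) - a * norm_derivative v) / a))
      with (norm_derivative (scal a v)) in Hq by (field; lra). lra.
  - apply Rnot_lt_le. intro H.
    destruct (norm_derivative_approx (scal a v) (a * norm_derivative v - norm_derivative (scal a v)))
      as [s [Hs Hq]]; [lra|].
    rewrite slope_scal in Hq by lra.
    assert (H1 := norm_derivative_le v (s * a) ltac:(apply Rmult_lt_0_compat; lra)).
    apply Rmult_le_compat_l with (r := a) in H1; lra.
Qed.

Lemma norm_slope_add v w s : 0 < s -> norm_slope (add v w) s <= norm_slope v (2 * s) + norm_slope w (2 * s).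
Proof.
  intros Hs. unfold norm_slope.
  set (yv := add y0 (scal (2 * s) v)). set (yw := add y0 (scal (2 * s) w)).
  assert (Hmid : add y0 (scal s (add v w)) = add (scal (/ 2) yv) (scal (/ 2) yw)).
  { unfold yv, yw. rewrite !scal_add_r, !scal_assoc, add_swap, <- scal_add_l.
    replace (/ 2 + / 2) with 1 by field. rewrite scal_one. f_equal.
    replace (/ 2 * (2 * s)) with s by field. reflexivity. }
  pose proof (norm_triangle (scal (/ 2) yv) (scal (/ 2) yw)) as Hn.
  rewrite <- Hmid, !norm_scal, Rabs_right in Hn by lra.
  apply Rmult_le_reg_l with s; auto.
  replace (s * ((norm (add y0 (scal s (add v w))) - norm y0) / s))
    with (norm (add y0 (scal s (add v w))) - norm y0) by (field; lra).
  replace (s * ((norm yv - norm y0) / (2 * s) + (norm yw - norm y0) / (2 * s)))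
    with (/ 2 * norm yv + / 2 * norm yw - norm y0) by (field; lra).
  lra.
Qed.

Lemma norm_derivative_subadditive v w : norm_derivative (add v w) <= norm_derivative v + norm_derivative w.
Proof.
  apply Rnot_lt_le. intro H.
  set (e := (norm_derivative (add v w) - norm_derivative v - norm_derivative w) / 2).
  destruct (norm_derivative_approx v e) as [s1 [Hs1 Hq1]]; [unfold e; lra|].
  destruct (norm_derivative_approx w e) as [s2 [Hs2 Hq2]]; [unfold e; lra|].
  set (s := Rmin s1 s2 / 2).
  assert (0 < s) by (unfold s; pose proof (Rmin_glb_lt s1 s2 0 Hs1 Hs2); lra).
  assert (2 * s <= s1) by (unfold s; pose proof (Rmin_l s1 s2); lra).
  assert (2 * s <= s2) by (unfold s; pose proof (Rmin_r s1 s2); lra).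
  pose proof (norm_derivative_le (add v w) s H0). pose proof (norm_slope_add v w s H0).
  pose proof (norm_slope_mono v (2 * s) s1 ltac:(lra) H1).
  pose proof (norm_slope_mono w (2 * s) s2 ltac:(lra) H2).
  unfold e in *. lra.
Qed.

End NormDerivative.

Section SmoothPoint.
Context {Y : NormedSpace}.
Variables (y0 : Y) (f : Y -> R).
Hypothesis f_supports : supports f y0.
Hypothesis f_unique : forall g, supports g y0 -> forall v, g v = f v.

(* Hahn-Banach under the sublinear [norm_derivative y0] produces a supporting functional
   attaining the derivative in any given direction; at a smooth point it can only be [f]. *)
Lemma smooth_norm_derivative v : norm_derivative y0 v = f v.
Proof.
  assert (Hline : forall a, a * norm_derivative y0 v <= norm_derivative y0 (scal a v)).
  { intro a. destruct (Rle_dec 0 a) as [Ha|Ha].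
    - rewrite norm_derivative_homogeneous; lra.
    - replace (scal a v) with (scal (- a) (scal (-1) v)) by (rewrite scal_assoc; f_equal; ring).
      rewrite norm_derivative_homogeneous by lra.
      pose proof (norm_derivative_subadditive y0 v (scal (-1) v)) as Hsum.
      rewrite <- opp_scal, add_opp, norm_derivative_zero, opp_scal in Hsum. nra. }
  destruct (hahn_banach_line (vector_space_of Y) (norm_derivative y0) v (norm_derivative y0 v))
    as [F [HF [Fle Fv]]].
  - apply norm_derivative_subadditive.
  - intros a x Ha. apply norm_derivative_homogeneous, Ha.
  - exact Hline.
  - assert (FB : in_dual_ball F).
    { apply dominated_in_dual_ball; auto. intro x.
      eapply Rle_trans; [apply Fle|apply norm_derivative_le_norm]. }
    assert (Fy0 : F y0 = norm y0).
    { apply Rle_antisym; [eapply Rle_trans; [apply Rle_abs|apply FB]|].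
      pose proof (Fle (scal (-1) y0)) as H1. simpl in H1. rewrite (in_dual_ball_scal F (-1) y0 FB) in H1.
      pose proof (norm_derivative_le y0 (scal (-1) y0) (/ 2) ltac:(lra)) as H2. unfold norm_slope in H2.
      replace (add y0 (scal (/ 2) (scal (-1) y0))) with (scal (/ 2) y0) in H2.
      - rewrite norm_scal, Rabs_pos_eq in H2 by lra.
        replace ((/ 2 * norm y0 - norm y0) / / 2) with (- norm y0) in H2 by field. lra.
      - rewrite scal_assoc. symmetry. rewrite <- (scal_one y0) at 1. rewrite <- scal_add_l.
        f_equal. field. }
    rewrite <- Fv. apply f_unique. split; auto.
Qed.

Lemma smulian_upper (k : nat -> Y -> R) v eps : (forall n, in_dual_ball (k n)) ->
  Un_cv (fun n => k n y0) (norm y0) -> 0 < eps ->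
  exists K, forall n, (n >= K)%nat -> k n v <= f v + eps.
Proof.
  intros Hk Hc He. destruct (norm_derivative_approx y0 v (eps / 2)) as [s [Hs Hq]]; [lra|].
  rewrite smooth_norm_derivative in Hq. unfold norm_slope in Hq.
  apply Rmult_lt_compat_l with (r := s) in Hq; auto.
  replace (s * ((norm (add y0 (scal s v)) - norm y0) / s)) with (norm (add y0 (scal s v)) - norm y0)
    in Hq by (field; lra).
  destruct (Hc (s * (eps / 2))) as [K HK]; [apply Rmult_lt_0_compat; lra|].
  exists K. intros n Hn. specialize (HK n Hn). unfold Rdist in HK. apply Rabs_def2 in HK.
  pose proof (proj2 (Hk n) (add y0 (scal s v))) as Hb. apply Rabs_le_iff in Hb.
  rewrite (in_dual_ball_add_scal (k n)) in Hb by apply Hk.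
  apply Rmult_le_reg_l with s; auto. lra.
Qed.

Lemma smulian (k : nat -> Y -> R) (w : nat -> Y) (wl : Y) : (forall n, in_dual_ball (k n)) ->
  Un_cv (fun n => k n y0) (norm y0) -> seq_converges w wl -> Un_cv (fun n => k n (w n)) (f wl).
Proof.
  intros Hk Hc Hw.
  assert (pointwise : Un_cv (fun n => k n wl) (f wl)).
  { intros eps He. destruct (smulian_upper k wl (eps / 2) Hk Hc ltac:(lra)) as [K1 HK1].
    destruct (smulian_upper k (scal (-1) wl) (eps / 2) Hk Hc ltac:(lra)) as [K2 HK2].
    exists (max K1 K2). intros n Hn. specialize (HK1 n ltac:(lia)). specialize (HK2 n ltac:(lia)).
    rewrite (in_dual_ball_scal f), (in_dual_ball_scal (k n)) in HK2 by (apply Hk || apply f_supports).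
    unfold Rdist. apply Rabs_def1; lra. }
  apply (in_dual_ball_moving_limit k w wl (f wl) Hk Hw), pointwise.
Qed.

End SmoothPoint.

(** * Semi-inner-products *)

Lemma sip_bound {N : NormedSpace} (s : N -> N -> R) v w : compatible_sip s ->
  Rabs (s v w) <= norm v * norm w.
Proof.
  intros [_ [_ [_ [Hcs [_ Hn]]]]]. specialize (Hcs v w). rewrite !Hn in Hcs.
  pose proof (norm_nonneg v). pose proof (norm_nonneg w). pose proof (Rabs_pos (s v w)).
  assert (Rabs (s v w) ^ 2 <= (norm v * norm w) ^ 2) by (rewrite pow2_abs; nra).
  apply Rsqr_incr_0_var; unfold Rsqr; nra.
Qed.

Lemma sip_normalized_in_dual_ball {N : NormedSpace} (s : N -> N -> R) b : compatible_sip s ->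
  in_dual_ball (fun v => s v b / norm b).
Proof.
  intros Hs. pose proof Hs as [Sa [Ssc _]]. split; [split|].
  - intros x y. rewrite Sa. unfold Rdiv. ring.
  - intros a x. rewrite Ssc. unfold Rdiv. ring.
  - intro v. destruct (classic (b = zero)) as [->|Hb].
    + rewrite norm_zero, Rdiv_0_r, Rabs_R0. apply norm_nonneg.
    + pose proof (norm_pos b Hb). unfold Rdiv. rewrite Rabs_mult, Rabs_inv, (Rabs_pos_eq (norm b)) by lra.
      apply Rmult_le_reg_r with (norm b); auto. rewrite Rmult_assoc, Rinv_l, Rmult_1_r by lra.
      apply sip_bound, Hs.
Qed.

Lemma sip_normalized_near_norm {N : NormedSpace} (s : N -> N -> R) b c : compatible_sip s ->
  Rabs (s c b / norm b - norm b) <= norm (sub b c).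
Proof.
  intros Hs. pose proof Hs as [Sa [Ssc [_ [_ [_ Sn]]]]].
  destruct (classic (b = zero)) as [->|Hb].
  - rewrite norm_zero, Rdiv_0_r, Rminus_0_r, Rabs_R0. apply norm_nonneg.
  - pose proof (norm_pos b Hb).
    assert (E : s c b = s b b - s (sub b c) b) by (unfold sub; rewrite Sa, opp_scal, Ssc; ring).
    rewrite E, Sn. replace ((norm b ^ 2 - s (sub b c) b) / norm b - norm b) with (- (s (sub b c) b / norm b))
      by (field; lra).
    rewrite Rabs_Ropp. eapply Rle_trans; [apply (proj2 (sip_normalized_in_dual_ball s b Hs))|]. lra.
Qed.

Section SemiInnerProductFromSupport.
Context {Y : NormedSpace}.
Variables (y0 : Y) (g : Y -> R).
Hypothesis g_supports : supports g y0.

Let u0 := scal (/ norm y0) y0.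

Let support_choice (u : Y) : Y -> R :=
  if excluded_middle_informative (u = u0) then g
  else if excluded_middle_informative (u = scal (-1) u0) then (fun x => - g x)
  else epsilon (inhabits (fun _ => 0)) (fun h => supports h u).

Lemma support_choice_supports u : supports (support_choice u) u.
Proof.
  assert (g_u0 : g u0 = norm u0).
  { unfold u0. rewrite (in_dual_ball_scal g), (proj2 g_supports), norm_scal by apply g_supports.
    f_equal. symmetry. apply Rabs_pos_eq. destruct (norm_nonneg y0) as [H|H].
    - left. apply Rinv_0_lt_compat, H.
    - rewrite <- H, Rinv_0. lra. }
  unfold support_choice. destruct excluded_middle_informative as [->|_]; [split; auto; apply g_supports|].
  destruct excluded_middle_informative as [->|_].
  - destruct g_supports as [[[ga gs] gb] _]. split; [split; [split|]|].
    + intros. rewrite ga. ring.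
    + intros. rewrite gs. ring.
    + intro. rewrite Rabs_Ropp. apply gb.
    + rewrite gs, norm_scal_m1, g_u0. ring.
  - apply epsilon_spec, supports_exists.
Qed.

Let symmetric_support (u : Y) (x : Y) : R := (support_choice u x - support_choice (scal (-1) u) x) / 2.

Lemma symmetric_support_supports u : supports (symmetric_support u) u.
Proof.
  destruct (support_choice_supports u) as [[[a1 s1] b1] e1].
  destruct (support_choice_supports (scal (-1) u)) as [[[a2 s2] b2] e2].
  rewrite s2, norm_scal_m1 in e2. unfold symmetric_support.
  split; [split; [split|]|].
  - intros. rewrite a1, a2. field.
  - intros. rewrite s1, s2. field.
  - intro x. specialize (b1 x). specialize (b2 x). apply Rabs_le_iff in b1, b2. apply Rabs_le_iff. lra.
  - lra.
Qed.

Lemma symmetric_support_opp u x : symmetric_support (scal (-1) u) x = - symmetric_support u x.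
Proof. unfold symmetric_support. rewrite scal_opp_opp. field. Qed.

Definition sip_of_support (x y : Y) : R := norm y * symmetric_support (scal (/ norm y) y) x.

Lemma sip_of_support_self x : sip_of_support x x = norm x ^ 2.
Proof.
  unfold sip_of_support. destruct (classic (x = zero)) as [->|Hx]; [rewrite norm_zero; ring|].
  pose proof (norm_pos x Hx). destruct (symmetric_support_supports (scal (/ norm x) x)) as [Hb Hself].
  replace (symmetric_support (scal (/ norm x) x) x)
    with (norm x * symmetric_support (scal (/ norm x) x) (scal (/ norm x) x)).
  - rewrite Hself, norm_normalize by exact Hx. ring.
  - rewrite (in_dual_ball_scal _ _ _ Hb). field. lra.
Qed.

Lemma sip_of_support_bound x y : Rabs (sip_of_support x y) <= norm x * norm y.
Proof.
  unfold sip_of_support. rewrite Rabs_mult, Rabs_pos_eq, Rmult_comm by apply norm_nonneg.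
  apply Rmult_le_compat_r; [apply norm_nonneg|]. apply symmetric_support_supports.
Qed.

Lemma sip_of_support_scal_r a x y : sip_of_support x (scal a y) = a * sip_of_support x y.
Proof.
  unfold sip_of_support. rewrite norm_scal, scal_assoc.
  destruct (classic (y = zero)) as [->|Hy]; [rewrite norm_zero; ring|].
  pose proof (norm_pos y Hy).
  destruct (Rtotal_order a 0) as [Ha|[->|Ha]].
  - rewrite Rabs_left by lra.
    replace (/ (- a * norm y) * a) with (-1 * / norm y) by (field; lra).
    rewrite <- scal_assoc, symmetric_support_opp. ring.
  - rewrite Rabs_R0. ring.
  - rewrite Rabs_pos_eq by lra. replace (/ (a * norm y) * a) with (/ norm y) by (field; lra). ring.
Qed.

Lemma sip_of_support_compatible : compatible_sip sip_of_support.
Proof.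
  split; [|split; [|split; [|split; [|split]]]].
  - intros x y z. unfold sip_of_support.
    rewrite (proj1 (proj1 (proj1 (symmetric_support_supports _)))). ring.
  - intros a x y. unfold sip_of_support.
    rewrite (in_dual_ball_scal _ _ _ (proj1 (symmetric_support_supports _))). ring.
  - intros x Hx. rewrite sip_of_support_self. pose proof (norm_pos x Hx). nra.
  - intros x y. rewrite !sip_of_support_self. pose proof (sip_of_support_bound x y).
    pose proof (Rabs_pos (sip_of_support x y)). rewrite <- (pow2_abs (sip_of_support x y)).
    pose proof (norm_nonneg x). pose proof (norm_nonneg y). nra.
  - apply sip_of_support_scal_r.
  - apply sip_of_support_self.
Qed.

Lemma sip_of_support_at v : y0 <> zero -> sip_of_support v y0 = norm y0 * g v.
Proof.
  intro Hy0. unfold sip_of_support. fold u0. f_equal.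
  assert (Hu0 : u0 <> scal (-1) u0).
  { apply neq_scal_m1. intro E. apply Hy0. rewrite <- (scal_one y0).
    replace 1 with (norm y0 * / norm y0) by (field; apply Rgt_not_eq, norm_pos, Hy0).
    rewrite <- scal_assoc. fold u0. rewrite E. apply scal_zero_r. }
  unfold symmetric_support, support_choice.
  destruct excluded_middle_informative as [_|]; [|congruence].
  destruct excluded_middle_informative as [E|_]; [exfalso; apply Hu0; symmetry; exact E|].
  destruct excluded_middle_informative as [_|]; [|congruence]. field.
Qed.

End SemiInnerProductFromSupport.

Lemma compatible_sip_through_support {Y : NormedSpace} (y0 : Y) (g : Y -> R) :
  y0 <> zero -> supports g y0 -> exists s, compatible_sip s /\ forall v, s v y0 = norm y0 * g v.
Proof.
  intros Hy0 Hg. exists (sip_of_support y0 g). split.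
  - apply sip_of_support_compatible, Hg.
  - intro v. apply sip_of_support_at, Hy0.
Qed.

Lemma compatible_sip_exists (Y : NormedSpace) : exists s : Y -> Y -> R, compatible_sip s.
Proof.
  destruct (supports_exists (@zero Y)) as [g Hg]. exists (sip_of_support zero g).
  apply sip_of_support_compatible, Hg.
Qed.

(** * Compact operators on a reflexive space *)

Definition rank_one {X Y : NormedSpace} (h : X -> R) (y : Y) : X -> Y := fun x => scal (h x) y.

Lemma rank_one_compact {X Y : NormedSpace} (h : X -> R) (y : Y) : in_dual h -> compact_op (rank_one h y).
Proof.
  intros Hh. unfold rank_one. split; [split|].
  - intros a b. rewrite (proj1 (proj1 Hh)), scal_add_l. reflexivity.
  - intros a b. rewrite (proj2 (proj1 Hh)), scal_assoc. reflexivity.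
  - intros u Hu.
    destruct (bolzano_weierstrass_subseq (fun n => h (u n)) (dual_norm h)) as [phi [c [Hphi Hc]]].
    + intro n. apply dual_norm_ub; auto.
    + exists phi, (scal c y). split; auto. apply (seq_converges_scal_l (fun n => h (u (phi n)))), Hc.
Qed.

Lemma functional_separating_line {X : NormedSpace} (x0 x1 : X) :
  norm x0 = 1 -> norm x1 = 1 -> x1 <> x0 -> x1 <> opp x0 -> exists h, in_dual h /\ h x0 = 0 /\ h x1 <> 0.
Proof.
  intros N0 N1 D0 D1. destruct (supports_exists x0) as [f [Hf Hfx0]]. rewrite N0 in Hfx0.
  set (w := sub x1 (scal (f x1) x0)).
  assert (Hw : w <> zero).
  { intro E. apply sub_eq in E. rewrite E, norm_scal, N0, Rmult_1_r in N1.
    revert E N1. unfold Rabs. destruct Rcase_abs; intros E N1.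
    - apply D1. rewrite E, opp_scal. f_equal. lra.
    - apply D0. rewrite E, N1. apply scal_one. }
  destruct (supports_exists w) as [k [Hk Hkw]].
  exists (fun x => k x + - k x0 * f x). split; [|split].
  - apply in_dual_add; [|apply in_dual_scal]; apply in_dual_ball_in_dual; auto.
  - rewrite Hfx0. ring.
  - pose proof (norm_pos w Hw). unfold w in *.
    rewrite linear_functional_sub, (in_dual_ball_scal k) in Hkw by apply Hk. nra.
Qed.

Lemma attained_on_sphere {X Y : NormedSpace} (T : X -> Y) x : bounded_op T -> norm x <= 1 ->
  norm (T x) = op_norm T -> 0 < op_norm T -> norm x = 1.
Proof.
  intros HT [Hx|Hx] HTx Hpos; auto. exfalso. pose proof (op_norm_bound T x HT). nra.
Qed.

Section ReflexiveCompact.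
Context {X Y : NormedSpace}.
Hypothesis HXr : reflexive X.

Lemma norming_sequence_exists (B : X -> Y) : bounded_op B ->
  exists u : nat -> X, (forall n, norm (u n) <= 1) /\ Un_cv (fun n => norm (B (u n))) (op_norm B).
Proof.
  intros HB.
  assert (Hx : forall n : nat, exists x : X, norm x <= 1 /\ op_norm B - / INR (S n) < norm (B x)).
  { intro n. apply NNPP. intro Hn.
    assert (0 < / INR (S n)) by (apply Rinv_0_lt_compat, lt_0_INR; lia).
    assert (op_norm B <= op_norm B - / INR (S n)); [|lra].
    apply op_norm_le; auto. intros x Hx. apply Rnot_lt_le. intro H'. apply Hn. exists x; auto. }
  destruct (choice _ Hx) as [u Hu].
  exists u. split; [intro n; apply Hu|].
  apply (Un_cv_squeeze _ _ _ Un_cv_inv_succ). intro n. destruct (Hu n) as [H1 H2].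
  pose proof (op_norm_ub B (u n) HB H1). apply Rabs_le_iff. lra.
Qed.

Lemma compact_pair_subsequence (T B : X -> Y) (u : nat -> X) : compact_op T -> compact_op B ->
  (forall n, norm (u n) <= 1) ->
  exists psi x, strictly_increasing psi /\ norm x <= 1 /\
    seq_converges (fun n => T (u (psi n))) (T x) /\ seq_converges (fun n => B (u (psi n))) (B x).
Proof.
  intros HT HB Hu.
  destruct (proj2 HT u Hu) as [p1 [y [Hp1 Hy]]].
  destruct (proj2 HB (fun n => u (p1 n))) as [p2 [z [Hp2 Hz]]]; [intro; apply Hu|].
  assert (Hy' : seq_converges (fun n => T (u (p1 (p2 n)))) y)
    by (apply (seq_converges_subseq (fun n => T (u (p1 n)))); auto).
  destruct (reflexive_joint_limit T B (fun n => u (p1 (p2 n))) y z) as [x [Hx [<- <-]]];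
    auto using compact_op_bounded.
  exists (fun n => p1 (p2 n)), x. split; [apply strictly_increasing_comp|]; auto.
Qed.

Lemma compact_attains_norm (B : X -> Y) : compact_op B -> exists x, norm x <= 1 /\ norm (B x) = op_norm B.
Proof.
  intros HB. destruct (norming_sequence_exists B (compact_op_bounded B HB)) as [u [Hu Hn]].
  destruct (compact_pair_subsequence B B u HB HB Hu) as [psi [x [Hpsi [Hx [HBx _]]]]].
  exists x. split; auto. apply (UL_sequence (fun n => norm (B (u (psi n))))).
  - apply seq_converges_norm, HBx.
  - apply (Un_cv_subseq (fun n => norm (B (u n)))); auto.
Qed.

Lemma norm_attainment_exists (T : X -> Y) : compact_op T -> T <> op_zero ->
  exists x, norm_attainment_set T x.
Proof.
  intros HT HT0. pose proof (compact_op_bounded T HT) as HTb.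
  destruct (compact_attains_norm T HT) as [x [Hx Hn]]. exists x. split; auto.
  apply (attained_on_sphere T); auto. apply op_norm_pos; auto.
Qed.

Lemma norming_subsequence_limit (T B : X -> Y) (u : nat -> X) : compact_op T -> compact_op B ->
  0 < op_norm T -> (forall n, norm (u n) <= 1) -> Un_cv (fun n => norm (T (u n))) (op_norm T) ->
  exists psi x, strictly_increasing psi /\ norm_attainment_set T x /\
    seq_converges (fun n => T (u (psi n))) (T x) /\ seq_converges (fun n => B (u (psi n))) (B x).
Proof.
  intros HT HB Hpos Hu Hn.
  destruct (compact_pair_subsequence T B u HT HB Hu) as [psi [x [Hpsi [Hx [HTx HBx]]]]].
  assert (HTn : norm (T x) = op_norm T).
  { apply (UL_sequence (fun n => norm (T (u (psi n))))); [apply seq_converges_norm, HTx|].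
    apply (Un_cv_subseq (fun n => norm (T (u n)))); auto. }
  exists psi, x. split; [|split; [split|]]; auto.
  apply (attained_on_sphere T); auto using compact_op_bounded.
Qed.

End ReflexiveCompact.

(** * Norm-one functionals *)

Section NormOneFunctional.
Variables (V : Type) (P : V -> Prop) (addV : V -> V -> V) (scalV : R -> V -> V) (nrm : V -> R).

Lemma norm_one_functional_intro f t :
  (forall u v, P u -> P v -> f (addV u v) = f u + f v) -> (forall a u, P u -> f (scalV a u) = a * f u) ->
  (forall u, P u -> Rabs (f u) <= nrm u) ->
  P (scalV (/ nrm t) t) -> nrm (scalV (/ nrm t) t) = 1 -> 0 < nrm t -> P t -> f t = nrm t ->
  norm_one_functional P addV scalV nrm f.
Proof.
  intros Ha Hs Hb Pu Nu Hpos Pt Ht. split; [|split]; auto. split.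
  - intros r [u [Hu [Hu1 ->]]]. eapply Rle_trans; [apply Hb|]; auto.
  - intros c Hc. apply Hc. exists (scalV (/ nrm t) t). split; [|split]; auto; [lra|].
    rewrite Hs, Ht, Rinv_l, Rabs_R1 by (auto; lra). reflexivity.
Qed.

Lemma norm_one_functional_bound f u : norm_one_functional P addV scalV nrm f -> P u ->
  (forall c, P (scalV c u)) -> (forall c, 0 <= c -> nrm (scalV c u) = c * nrm u) ->
  (nrm u = 0 -> u = scalV 0 u) -> 0 <= nrm u -> Rabs (f u) <= nrm u.
Proof.
  intros [_ [Hs Hlub]] Pu Ps Hn H0 [Hpos|Hz].
  - assert (H1 : Rabs (f (scalV (/ nrm u) u)) <= 1).
    { apply Hlub. exists (scalV (/ nrm u) u). split; [|split]; auto.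
      rewrite Hn, Rinv_l by (first [lra | left; apply Rinv_0_lt_compat; auto]). lra. }
    rewrite Hs, Rabs_mult, Rabs_pos_eq in H1 by (auto; left; apply Rinv_0_lt_compat; auto).
    apply Rmult_le_compat_l with (r := nrm u) in H1; [|lra].
    rewrite <- Rmult_assoc, Rinv_r, Rmult_1_l, Rmult_1_r in H1 by lra. exact H1.
  - assert (f u = 0) by (rewrite H0, Hs by (first [assumption | lra]); ring).
    rewrite H, Rabs_R0. lra.
Qed.

End NormOneFunctional.

Section SmoothPointCharacterization.
Context {Y : NormedSpace}.

Let norm_one_Y := norm_one_functional (fun _ : Y => True) (@add Y) (@scal Y) (@norm Y).

Lemma norm_one_Y_in_dual_ball (f : Y -> R) : norm_one_Y f -> in_dual_ball f.
Proof.
  intros Hf. pose proof Hf as [Ha [Hs _]]. split; [split; auto|]. intro y.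
  apply (norm_one_functional_bound _ (fun _ => True) add scal); auto.
  - intros c Hc. rewrite norm_scal, Rabs_pos_eq; auto.
  - intro H0. rewrite scal_zero_l. apply norm_eq_zero, H0.
  - apply norm_nonneg.
Qed.

Lemma supports_norm_one_Y (f : Y -> R) y : supports f y -> y <> zero -> norm_one_Y f.
Proof.
  intros [[[Ha Hs] Hb] Hfy] Hy.
  apply (norm_one_functional_intro _ _ _ _ _ f y); auto; [apply norm_normalize, Hy|apply norm_pos, Hy].
Qed.

Lemma smooth_point_iff (y : Y) : smooth_point y <->
  y <> zero /\ exists f, supports f y /\ forall g, supports g y -> forall v, g v = f v.
Proof.
  split.
  - intros [_ [Hy [f [Hf [Hfy Hu]]]]]. split; auto. exists f.
    split; [split; auto; apply norm_one_Y_in_dual_ball; auto|].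
    intros g Hg v. apply (Hu g); [apply (supports_norm_one_Y g y); auto|apply Hg|exact I].
  - intros [Hy [f [Hf Hu]]]. split; auto. split; auto. exists f.
    split; [apply (supports_norm_one_Y f y); auto|split; [apply Hf|]].
    intros g Hg Hgy v _. apply Hu. split; auto. apply norm_one_Y_in_dual_ball; auto.
Qed.

End SmoothPointCharacterization.

Section NormOneOnCompactOperators.
Context {X Y : NormedSpace}.

Definition norm_one_on_K (P : (X -> Y) -> R) :=
  norm_one_functional (@compact_op X Y) op_add op_scal op_norm P.

Lemma norm_one_on_K_bound P A : norm_one_on_K P -> compact_op A -> Rabs (P A) <= op_norm A.
Proof.
  intros HP HA. pose proof (compact_op_bounded A HA) as HAb.
  apply (norm_one_functional_bound _ compact_op op_add op_scal); auto.
  - intro c. apply compact_op_scal, HA.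
  - intros c Hc. rewrite op_norm_scal, Rabs_pos_eq; auto.
  - intro H0. apply functional_extensionality. intro x. unfold op_scal. rewrite scal_zero_l.
    apply norm_eq_zero. pose proof (op_norm_bound A x HAb). rewrite H0 in H.
    pose proof (norm_nonneg (A x)). lra.
  - apply op_norm_nonneg, HAb.
Qed.

Lemma evaluation_norm_one_on_K (T : X -> Y) x g : compact_op T -> T <> op_zero ->
  norm_attainment_set T x -> supports g (T x) -> norm_one_on_K (fun A => g (A x)) /\ g (T x) = op_norm T.
Proof.
  intros HT HT0 [Nx NTx] [Hg Hgx]. rewrite NTx in Hgx. split; auto.
  pose proof (compact_op_bounded T HT) as HTb. pose proof (op_norm_pos T HTb HT0).
  apply (norm_one_functional_intro _ _ _ _ _ _ T); auto.
  - intros A B _ _. apply (proj1 (proj1 Hg)).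
  - intros a A _. apply (proj2 (proj1 Hg)).
  - intros A HA. eapply Rle_trans; [apply Hg|]. apply op_norm_ub; [apply compact_op_bounded, HA|lra].
  - apply compact_op_scal, HT.
  - rewrite op_norm_scal, Rabs_pos_eq, Rinv_l by (first [lra | left; apply Rinv_0_lt_compat; lra | auto]).
    reflexivity.
Qed.

End NormOneOnCompactOperators.

(** * The three conditions *)

Lemma unit_multiple_pm {N : NormedSpace} (x y : N) c : norm x = 1 -> norm y = 1 -> y = scal c x ->
  y = x \/ y = opp x.
Proof.
  intros Nx Ny E. rewrite E, norm_scal, Nx, Rmult_1_r in Ny. rewrite E, opp_scal.
  revert Ny. unfold Rabs. destruct Rcase_abs; intro Hc.
  - right. f_equal. lra.
  - left. replace c with 1 by lra. apply scal_one.
Qed.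

Lemma pm_eq_scal_sign {N : NormedSpace} (x x0 : N) : x = x0 \/ x = opp x0 ->
  exists sg, sg * sg = 1 /\ x0 = scal sg x.
Proof.
  intros [->| ->]; [exists 1; rewrite scal_one|exists (-1); rewrite opp_scal, scal_opp_opp];
    split; auto; ring.
Qed.

Definition norm_attained_only_at {X Y : NormedSpace} (T : X -> Y) (x0 : X) :=
  forall x, norm_attainment_set T x <-> (x = x0 \/ x = opp x0).

Definition sip_limits_vanish {X Y : NormedSpace} (T A : X -> Y) :=
  forall s : Y -> Y -> R, compatible_sip s -> forall u : nat -> X, norming_sequence T u ->
  forall l, subsequential_limit (fun n => s (A (u n)) (T (u n))) l -> l = 0.

Lemma op_norm_perturb_lower {X Y : NormedSpace} (T B : X -> Y) s :
  bounded_op T -> bounded_op B -> op_norm T - Rabs s * op_norm B <= op_norm (op_add T (op_scal s B)).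
Proof.
  intros HT HB. pose proof (bounded_op_add T _ HT (bounded_op_scal B s HB)) as HC.
  cut (op_norm T <= op_norm (op_add T (op_scal s B)) + Rabs s * op_norm B); [lra|].
  apply op_norm_le; auto. intros x Hx.
  replace (T x) with (add (op_add T (op_scal s B) x) (scal (- s) (B x))).
  - eapply Rle_trans; [apply norm_triangle|]. rewrite norm_scal, Rabs_Ropp.
    apply Rplus_le_compat; [apply op_norm_ub; auto|].
    apply Rmult_le_compat_l; [apply Rabs_pos|apply op_norm_ub; auto].
  - unfold op_add, op_scal. rewrite <- add_assoc, <- scal_add_l, Rplus_opp_r, scal_zero_l, add_zero.
    reflexivity.
Qed.

Lemma perturbed_maximizer {X Y : NormedSpace} (T B : X -> Y) s x g :
  bounded_op T -> bounded_op B -> 0 < s -> norm x <= 1 ->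
  norm (op_add T (op_scal s B) x) = op_norm (op_add T (op_scal s B)) ->
  supports g (op_add T (op_scal s B) x) ->
  op_norm (op_add T (op_scal s B)) - op_norm T <= s * g (B x) /\
  Rabs (g (T x) - op_norm T) <= 2 * s * op_norm B.
Proof.
  intros HT HB Hs Hx Hmax [Hg Hgx].
  assert (Hsum : g (T x) + s * g (B x) = op_norm (op_add T (op_scal s B))).
  { rewrite <- Hmax, <- Hgx. unfold op_add, op_scal. rewrite (in_dual_ball_add_scal g) by exact Hg.
    reflexivity. }
  pose proof (op_norm_perturb_lower T B s HT HB). rewrite Rabs_pos_eq in H by lra.
  assert (gT : g (T x) <= op_norm T).
  { eapply Rle_trans; [apply Rle_abs|]. eapply Rle_trans; [apply Hg|]. apply op_norm_ub; auto. }
  assert (gB : g (B x) <= op_norm B).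
  { eapply Rle_trans; [apply Rle_abs|]. eapply Rle_trans; [apply Hg|]. apply op_norm_ub; auto. }
  split; [lra|]. apply Rabs_le_iff. nra.
Qed.

Section CompactOperatorOnReflexive.
Context {X Y : NormedSpace}.
Hypothesis HXr : reflexive X.
Variable T : X -> Y.
Hypothesis HTK : compact_op T.
Hypothesis HT0 : T <> op_zero.

Let HTb : bounded_op T := compact_op_bounded T HTK.
Let nT_pos : 0 < op_norm T := op_norm_pos T HTb HT0.

Lemma norm_attainment_opp x : norm_attainment_set T x -> norm_attainment_set T (opp x).
Proof.
  intros [N1 N2]. split; [rewrite norm_opp; auto|].
  rewrite opp_scal, (proj2 (proj1 HTK)), norm_scal_m1. exact N2.
Qed.

Lemma norm_attainment_nonzero x : norm_attainment_set T x -> T x <> zero.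
Proof. intros [_ E] Z. rewrite Z, norm_zero in E. lra. Qed.

Lemma bj_orth_of_support x0 f A : norm_attainment_set T x0 -> supports f (T x0) -> compact_op A ->
  f (A x0) = 0 -> BJ_orth_K T A.
Proof.
  intros Hx0 [Hf Hfy] HA HfA lam. apply Rle_ge.
  assert (HK : bounded_op (op_add T (op_scal lam A)))
    by (apply compact_op_bounded, compact_op_add, compact_op_scal; auto).
  apply Rle_trans with (Rabs (f (op_add T (op_scal lam A) x0))).
  - eapply Rle_trans; [|apply Rle_abs]. unfold op_add, op_scal.
    rewrite (in_dual_ball_add_scal f), HfA, Hfy, (proj2 Hx0) by exact Hf. lra.
  - eapply Rle_trans; [apply Hf|]. apply op_norm_ub; auto. rewrite (proj1 Hx0). lra.
Qed.

Lemma sip_limits_vanish_at A x s : sip_limits_vanish T A -> norm_attainment_set T x ->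
  compatible_sip s -> s (A x) (T x) = 0.
Proof.
  intros H [N1 N2] Hs. apply (H s Hs (fun _ => x)).
  - split; [auto|]. rewrite N2. apply Un_cv_const.
  - exists (fun n => n). split; [apply strictly_increasing_id|apply Un_cv_const].
Qed.

Lemma attainment_of_smooth_K : smooth_point_K T ->
  exists x0, norm x0 = 1 /\ norm_attained_only_at T x0 /\ smooth_point (T x0).
Proof.
  intros [_ [_ [P0 [HP0 [HP0T P0_unique]]]]].
  assert (eval : forall x g, norm_attainment_set T x -> supports g (T x) ->
            forall A, compact_op A -> g (A x) = P0 A).
  { intros x g Hx Hg A HA. destruct (evaluation_norm_one_on_K T x g HTK HT0 Hx Hg) as [H1 H2].
    apply (P0_unique (fun A => g (A x))); auto. }
  destruct (norm_attainment_exists HXr T HTK HT0) as [x0 Hx0].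
  destruct (supports_exists (T x0)) as [f0 Hf0].
  exists x0. split; [apply Hx0|split].
  - intro x1. split; [|intros [-> | ->]; auto using norm_attainment_opp].
    intro Hx1. destruct (supports_exists (T x1)) as [f1 Hf1].
    set (c := f1 (T x0) / op_norm T).
    assert (Hsep : forall h, in_dual_ball h -> h (sub x0 (scal c x1)) = 0).
    { intros h Hh. pose proof (rank_one_compact h (T x0) (in_dual_ball_in_dual h Hh)) as HA.
      pose proof (eval x0 f0 Hx0 Hf0 _ HA) as E0. pose proof (eval x1 f1 Hx1 Hf1 _ HA) as E1.
      unfold rank_one in E0, E1. rewrite (in_dual_ball_scal f0), (proj2 Hf0), (proj2 Hx0) in E0 by apply Hf0.
      rewrite (in_dual_ball_scal f1) in E1 by apply Hf1.
      rewrite linear_functional_sub, (in_dual_ball_scal h) by apply Hh. unfold c.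
      apply Rmult_eq_reg_r with (op_norm T); [|lra]. field_simplify; lra. }
    assert (E : x0 = scal c x1) by (apply sub_eq, separation; auto).
    destruct (unit_multiple_pm x1 x0 c (proj1 Hx1) (proj1 Hx0) E) as [->| ->]; [left; auto|].
    right. rewrite !opp_scal, scal_opp_opp. reflexivity.
  - apply smooth_point_iff. split; [apply norm_attainment_nonzero; auto|]. exists f0. split; auto.
    intros g Hg v. destruct (supports_exists x0) as [h0 Hh0].
    pose proof (rank_one_compact h0 v (in_dual_ball_in_dual _ (proj1 Hh0))) as HA.
    pose proof (eval x0 f0 Hx0 Hf0 _ HA). pose proof (eval x0 g Hx0 Hg _ HA).
    unfold rank_one in *. rewrite (proj2 Hh0), (proj1 Hx0), scal_one in *. congruence.
Qed.

Section SmoothAttainment.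
Variable x0 : X.
Hypothesis x0_only : norm_attained_only_at T x0.
Variable f : Y -> R.
Hypothesis f_supports : supports f (T x0).
Hypothesis f_unique : forall g, supports g (T x0) -> forall v, g v = f v.

Let x0_attains : norm_attainment_set T x0 := proj2 (x0_only x0) (or_introl eq_refl).

(* A subsequence of [u_n] tends to [sg x0] with [sg = 1] or [-1], and Smulian's lemma applies at the
   smooth point [T x0]. *)
Lemma attained_smulian (B : X -> Y) (u : nat -> X) (k : nat -> Y -> R) : compact_op B ->
  (forall n, norm (u n) <= 1) -> (forall n, in_dual_ball (k n)) ->
  Un_cv (fun n => k n (T (u n))) (op_norm T) ->
  exists psi, strictly_increasing psi /\ Un_cv (fun n => k (psi n) (B (u (psi n)))) (f (B x0)).
Proof.
  intros HB Hu Hk Hkc.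
  assert (norming : Un_cv (fun n => norm (T (u n))) (op_norm T)).
  { apply (Un_cv_squeeze _ _ _ (Un_cv_dist _ _ Hkc)). intro n. pose proof (op_norm_ub T (u n) HTb (Hu n)).
    pose proof (proj2 (Hk n) (T (u n))). apply Rabs_le_iff in H0.
    rewrite Rabs_left1 by lra. rewrite Rabs_minus_sym, Rabs_right by lra. lra. }
  destruct (norming_subsequence_limit HXr T B u HTK HB nT_pos Hu norming) as [psi [x [Hpsi [Hx [HTx HBx]]]]].
  destruct (pm_eq_scal_sign x x0 (proj1 (x0_only x) Hx)) as [sg [Hsg Ex0]].
  set (k' := fun n v => sg * k (psi n) v).
  assert (Hk' : forall n, in_dual_ball (k' n)) by (intro n; apply in_dual_ball_sign; auto).
  assert (Hk'x0 : Un_cv (fun n => k' n (T x0)) (norm (T x0))).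
  { rewrite (proj2 x0_attains).
    apply (Un_cv_ext (fun n => k (psi n) (T x))).
    - intro n. unfold k'. rewrite Ex0, (proj2 (proj1 HTK)), (in_dual_ball_scal (k (psi n))), <- Rmult_assoc,
        Hsg, Rmult_1_l by apply Hk. reflexivity.
    - apply (in_dual_ball_moving_limit (fun n => k (psi n)) (fun n => T (u (psi n)))); auto.
      apply (Un_cv_subseq (fun n => k n (T (u n)))); auto. }
  exists psi. split; auto.
  apply (Un_cv_ext (fun n => k' n (scal sg (B (u (psi n)))))).
  - intro n. unfold k'. rewrite (in_dual_ball_scal (k (psi n))), <- Rmult_assoc, Hsg, Rmult_1_l by apply Hk.
    reflexivity.
  - apply (smulian (T x0) f f_supports f_unique k'); auto.
    rewrite Ex0, (proj2 (proj1 HB)). apply seq_converges_scal, HBx.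
Qed.

Lemma op_norm_increment_le (B : X -> Y) eps : compact_op B -> 0 < eps ->
  exists s, 0 < s /\ op_norm (op_add T (op_scal s B)) <= op_norm T + s * (f (B x0) + eps).
Proof.
  intros HB He. apply NNPP. intro Hn.
  pose proof (compact_op_bounded B HB) as HBb.
  set (sn := fun n => / INR (S n)).
  assert (Hsn : forall n, 0 < sn n) by (intro; apply Rinv_0_lt_compat, lt_0_INR; lia).
  set (C := fun n => op_add T (op_scal (sn n) B)).
  assert (HC : forall n, compact_op (C n)) by (intro; apply compact_op_add, compact_op_scal; auto).
  destruct (choice (fun (n : nat) (x : X) => norm x <= 1 /\ norm (C n x) = op_norm (C n)))
    as [x Hx]; [intro n; apply (compact_attains_norm HXr), HC|].
  destruct (choice (fun (n : nat) (g : Y -> R) => supports g (C n (x n)))) as [g Hg];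
    [intro n; apply supports_exists|].
  assert (Hmax : forall n, op_norm (C n) - op_norm T <= sn n * g n (B (x n)) /\
                   Rabs (g n (T (x n)) - op_norm T) <= 2 * sn n * op_norm B)
    by (intro n; apply perturbed_maximizer; auto; apply Hx).
  assert (gap : forall n, f (B x0) + eps < g n (B (x n))).
  { intro n. destruct (Hmax n) as [Hinc _].
    assert (op_norm T + sn n * (f (B x0) + eps) < op_norm (C n))
      by (apply Rnot_le_lt; intro; apply Hn; exists (sn n); auto).
    apply Rmult_lt_reg_l with (sn n); auto. lra. }
  destruct (attained_smulian B x g HB (fun n => proj1 (Hx n)) (fun n => proj1 (Hg n))) as [psi [Hpsi Hlim]].
  - apply (Un_cv_squeeze _ (fun n => 2 * op_norm B * sn n)).
    2: { intro n. rewrite Rmult_assoc, (Rmult_comm (op_norm B)), <- Rmult_assoc. apply Hmax. }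
    rewrite <- (Rmult_0_r (2 * op_norm B)). apply CV_mult; [apply Un_cv_const|apply Un_cv_inv_succ].
  - pose proof (Un_cv_ge_const _ _ (f (B x0) + eps) Hlim (fun n => Rlt_le _ _ (gap (psi n)))). lra.
Qed.

Lemma norm_one_on_K_eq_evaluation P A : norm_one_on_K P -> P T = op_norm T -> compact_op A -> P A = f (A x0).
Proof.
  intros HP HPT HA. pose proof HP as [Pa [Ps _]].
  assert (upper : forall B, compact_op B -> P B <= f (B x0)).
  { intros B HB. apply Rnot_lt_le. intro Hlt.
    destruct (op_norm_increment_le B ((P B - f (B x0)) / 2) HB) as [s [Hs Hinc]]; [lra|].
    pose proof (norm_one_on_K_bound P (op_add T (op_scal s B)) HP
                  (compact_op_add _ _ HTK (compact_op_scal _ s HB))).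
    rewrite Pa, Ps, HPT in H by (auto; apply compact_op_scal; auto). apply Rabs_le_iff in H.
    assert (s * P B <= s * (f (B x0) + (P B - f (B x0)) / 2)) by lra.
    apply Rmult_le_reg_l in H0; auto. lra. }
  apply Rle_antisym; [apply upper; auto|].
  pose proof (upper (op_scal (-1) A) (compact_op_scal _ _ HA)) as H.
  rewrite Ps in H by auto. unfold op_scal in H. rewrite (in_dual_ball_scal f) in H by apply f_supports. lra.
Qed.

Lemma smooth_K_of_attainment : smooth_point_K T.
Proof.
  destruct (evaluation_norm_one_on_K T x0 f HTK HT0 x0_attains f_supports) as [Hnof HPT].
  split; auto. split; auto. exists (fun A => f (A x0)). split; [|split]; auto.
  intros P HP HPT' A HA. apply norm_one_on_K_eq_evaluation; auto.
Qed.

Lemma bj_orth_iff A : compact_op A -> (BJ_orth_K T A <-> f (A x0) = 0).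
Proof.
  intros HA. split; [|apply bj_orth_of_support; auto].
  intros HBJ. apply NNPP. intro Hne.
  set (sg := if Rlt_dec 0 (f (A x0)) then -1 else 1).
  assert (Hneg : f (op_scal sg A x0) < 0).
  { unfold op_scal. rewrite (in_dual_ball_scal f) by apply f_supports. unfold sg.
    destruct Rlt_dec; lra. }
  destruct (op_norm_increment_le (op_scal sg A) (- f (op_scal sg A x0) / 2)) as [s [Hs Hinc]];
    [apply compact_op_scal; auto|lra|].
  specialize (HBJ (s * sg)).
  replace (op_add T (op_scal s (op_scal sg A))) with (op_add T (op_scal (s * sg) A)) in Hinc
    by (apply functional_extensionality; intro x; unfold op_add, op_scal; rewrite scal_assoc; reflexivity).
  nra.
Qed.

Lemma sip_limits_vanish_iff A : compact_op A -> (sip_limits_vanish T A <-> f (A x0) = 0).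
Proof.
  intros HA. split.
  - intros HR. destruct (compatible_sip_through_support (T x0) f) as [s [Hs Hsv]];
      [apply norm_attainment_nonzero, x0_attains|apply f_supports|].
    pose proof (sip_limits_vanish_at A x0 s HR x0_attains Hs) as H. rewrite Hsv in H.
    apply Rmult_integral in H. destruct H as [H|H]; auto.
    exfalso. apply (norm_attainment_nonzero x0 x0_attains), norm_eq_zero, H.
  - intros H0 s Hs u [Hu1 Hun] l [phi [Hphi Hl]].
    set (k := fun n v => s v (T (u (phi n))) / norm (T (u (phi n)))).
    assert (Hk : forall n, in_dual_ball (k n)) by (intro; apply sip_normalized_in_dual_ball, Hs).
    assert (Hkc : Un_cv (fun n => k n (T (u (phi n)))) (op_norm T)).
    { apply (Un_cv_squeeze _ _ _ (Un_cv_dist _ _ (Un_cv_subseq _ _ _ Hun Hphi))). intro n. unfold k.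
      pose proof (sip_normalized_near_norm s (T (u (phi n))) (T (u (phi n))) Hs) as H.
      rewrite sub_self, norm_zero in H. apply Rabs_le_iff in H.
      replace (s (T (u (phi n))) (T (u (phi n))) / norm (T (u (phi n)))) with (norm (T (u (phi n)))) by lra.
      apply Rle_refl. }
    destruct (attained_smulian A (fun n => u (phi n)) k HA) as [psi [Hpsi Hlim]]; auto.
    { intro n. rewrite Hu1. lra. }
    apply (UL_sequence (fun n => s (A (u (phi (psi n)))) (T (u (phi (psi n)))))).
    + apply (Un_cv_subseq (fun n => s (A (u (phi n))) (T (u (phi n))))); auto.
    + rewrite <- (Rmult_0_r (op_norm T)), <- H0.
      apply (Un_cv_ext (fun n => norm (T (u (phi (psi n)))) * k (psi n) (A (u (phi (psi n)))))).
      * intro n. unfold k. destruct (classic (T (u (phi (psi n))) = zero)) as [Z|Z].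
        -- pose proof Hs as [_ [_ [_ [_ [Sr _]]]]].
           rewrite Z, norm_zero, Rmult_0_l, <- (scal_zero_l zero), Sr. ring.
        -- pose proof (norm_pos _ Z). field. lra.
      * apply CV_mult; auto. apply (Un_cv_subseq (fun n => norm (T (u (phi n))))); auto.
        apply (Un_cv_subseq (fun n => norm (T (u n)))); auto.
Qed.

End SmoothAttainment.

Lemma attained_only_at_of_bj_sip x0 : (forall A, compact_op A -> (BJ_orth_K T A <-> sip_limits_vanish T A)) ->
  norm_attainment_set T x0 -> norm_attained_only_at T x0.
Proof.
  intros Hequiv Hx0 x1. split; [|intros [-> | ->]; auto using norm_attainment_opp].
  intro Hx1. apply NNPP. intro Hn.
  destruct (functional_separating_line x0 x1 (proj1 Hx0) (proj1 Hx1)) as [h [Hh [Hh0 Hh1]]]; [tauto|tauto|].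
  destruct (supports_exists (T x0)) as [f Hf].
  set (A := rank_one h (T x1)). assert (HA : compact_op A) by (apply rank_one_compact; auto).
  assert (HBJ : BJ_orth_K T A).
  { apply (bj_orth_of_support x0 f A); auto. unfold A, rank_one. rewrite Hh0, scal_zero_l.
    apply linear_functional_zero, Hf. }
  apply Hequiv in HBJ; auto.
  destruct (compatible_sip_exists Y) as [s Hs].
  pose proof (sip_limits_vanish_at A x1 s HBJ Hx1 Hs) as H. unfold A, rank_one in H.
  pose proof Hs as [_ [Ssc [Spos _]]]. rewrite Ssc in H. apply Rmult_integral in H.
  destruct H as [H|H]; [contradiction|].
  pose proof (Spos _ (norm_attainment_nonzero x1 Hx1)). lra.
Qed.

Lemma smooth_of_bj_sip x0 : (forall A, compact_op A -> (BJ_orth_K T A <-> sip_limits_vanish T A)) ->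
  norm_attainment_set T x0 -> smooth_point (T x0).
Proof.
  intros Hequiv Hx0. pose proof (norm_attainment_nonzero x0 Hx0) as HTx0.
  destruct (supports_exists (T x0)) as [f [Hf Hfy]].
  apply smooth_point_iff. split; auto. exists f. split; [split; auto|].
  intros g [Hg Hgy] v. apply NNPP. intro Hne.
  set (nT := norm (T x0)). assert (HnT : 0 < nT) by (apply norm_pos; auto).
  set (w := sub v (scal (f v / nT) (T x0))).
  assert (Hfw : f w = 0).
  { unfold w. rewrite linear_functional_sub, (in_dual_ball_scal f), Hfy by apply Hf. fold nT. field. lra. }
  assert (Hgw : g w <> 0).
  { unfold w. rewrite linear_functional_sub, (in_dual_ball_scal g), Hgy by apply Hg. fold nT.
    replace (f v / nT * nT) with (f v) by (field; lra). intro E. apply Hne. lra. }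
  destruct (supports_exists x0) as [h0 [Hh0 Hh0x]]. rewrite (proj1 Hx0) in Hh0x.
  set (A := rank_one h0 w).
  assert (HA : compact_op A) by (apply rank_one_compact, in_dual_ball_in_dual; auto).
  assert (HAx : A x0 = w) by (unfold A, rank_one; rewrite Hh0x, scal_one; reflexivity).
  assert (HBJ : BJ_orth_K T A) by (apply (bj_orth_of_support x0 f A); [|split|..]; auto; rewrite HAx; auto).
  apply Hequiv in HBJ; auto.
  destruct (compatible_sip_through_support (T x0) g HTx0 (conj Hg Hgy)) as [s [Hs Hsv]].
  pose proof (sip_limits_vanish_at A x0 s HBJ Hx0 Hs) as H. rewrite HAx, Hsv in H.
  apply Rmult_integral in H. fold nT in H. destruct H; [lra|contradiction].
Qed.

End CompactOperatorOnReflexive.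

Theorem theorem3p1 (X Y : NormedSpace) (HXB : Banach X) (HXr : reflexive X)
  (T : X -> Y) (HTK : compact_op T) (HT0 : T <> op_zero) :
  (smooth_point_K T <->
   (exists x0 : X, norm x0 = 1 /\
      (forall x, norm_attainment_set T x <-> (x = x0 \/ x = opp x0)) /\
      smooth_point (T x0))) /\
  (smooth_point_K T <->
   (forall A : X -> Y, compact_op A ->
      (BJ_orth_K T A <->
       (forall s : Y -> Y -> R, compatible_sip s ->
        forall u : nat -> X, norming_sequence T u ->
        forall l, subsequential_limit (fun n => s (A (u n)) (T (u n))) l -> l = 0)))).
Proof.
  assert (i_ii : smooth_point_K T <->
    exists x0, norm x0 = 1 /\ norm_attained_only_at T x0 /\ smooth_point (T x0)).
  { split; [apply attainment_of_smooth_K; auto|].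
    intros [x0 [N0 [Hpm Hsm]]]. apply smooth_point_iff in Hsm. destruct Hsm as [_ [f [Hf Hu]]].
    apply (smooth_K_of_attainment HXr T HTK HT0 x0 Hpm f); auto. }
  split; [exact i_ii|]. split.
  - intros HS A HA. destruct (proj1 i_ii HS) as [x0 [N0 [Hpm Hsm]]].
    apply smooth_point_iff in Hsm. destruct Hsm as [_ [f [Hf Hu]]].
    rewrite (bj_orth_iff HXr T HTK HT0 x0 Hpm f Hf Hu A HA).
    rewrite (sip_limits_vanish_iff HXr T HTK HT0 x0 Hpm f Hf Hu A HA). reflexivity.
  - intros Hiii. apply i_ii. destruct (norm_attainment_exists HXr T HTK HT0) as [x0 Hx0].
    exists x0. split; [apply Hx0|split].
    + apply (attained_only_at_of_bj_sip T HTK HT0); auto.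
    + apply (smooth_of_bj_sip T HTK HT0); auto.
Qed.
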